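(* There exists a computable (2,1):1 structure $\mathcal{A}=(\omega,f)$ with no $\mathbb{Z}$-chains such that $\beta_{\mathcal{A}}$ and $iso_{\mathcal{A}}$ are computable, but $\mathcal{A}$ is not computably categorical; that is, there is a computable (2,1):1 structure $\mathcal{B}=(\omega,g)$ isomorphic to $\mathcal{A}$ such that no computable function is an isomorphism from $\mathcal{A}$ onto $\mathcal{B}$. (Necessarily such $\mathcal{A}$ has infinitely many $k$-cycles for some $k$; the example given consists entirely of $1$-cycles.)
   Context: A (2,1):1 structure is a pair $\mathcal{A}=(A,f)$ with $A$ a countable set and $f:A\to A$ such that $|f^{-1}(a)|\in\{1,2\}$ for every $a\in A$; it is computable if $A$ is a computable set and $f$ is computable. An element $x$ is cyclic if $f^n(x)=x$ for some $n>0$. The orbit of $x$ is $\{y:\exists m,n\ (f^m(x)=f^n(y))\}$. An orbit containing a directed cycle with exactly $k$ elements is a $k$-cycle; an orbit containing no cyclic element is a $\mathbb{Z}$-chain. The branching function is $\beta_{\mathcal{A}}(x)=|f^{-1}(x)|\in\{1,2\}$ and $\Lambda_{\mathcal{A}}=\{x:\beta_{\mathcal{A}}(x)=2\}$. For $x\in A$, $Tree_{\mathcal{A}}(x)$ is the directed graph with vertex set $\{a:\exists n\ge0\,(f^n(a)=x)\}$ and edges $(a,f(a))$ between such vertices. The branch isomorphism function $iso_{\mathcal{A}}:\Lambda_{\mathcal{A}}\to\{0,1\}$ is given, for $x\in\Lambda_{\mathcal{A}}$ with distinct pre-images $x_1,x_2$, by $iso_{\mathcal{A}}(x)=1$ iff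 $Tree_{\mathcal{A}}(x_1)\cong Tree_{\mathcal{A}}(x_2)$; it is computable if it is the restriction to $\Lambda_{\mathcal{A}}$ of a partial computable function. A computable structure is computably categorical if any two computable structures isomorphic to it are computably isomorphic. *)

From Stdlib Require Import Arith List.
Import ListNotations.

Inductive code : Type :=
| Zero : code
| Succ : code
| Proj : nat -> code
| Comp : code -> list code -> code
| Prec : code -> code -> code
| Mu   : code -> code.

Inductive eval : code -> list nat -> nat -> Prop :=
| eval_zero : forall v, eval Zero v 0
| eval_succ : forall x v, eval Succ (x :: v) (S x)
| eval_proj : forall i v, i < length v -> eval (Proj i) v (nth i v 0)
| eval_comp : forall h gs v ys y,
    evals gs v ys -> eval h ys y -> eval (Comp h gs) v y
| eval_prec0 : forall b s v y, eval b v y -> eval (Prec b s) (0 :: v) y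
| eval_precS : forall b s n v r y,
    eval (Prec b s) (n :: v) r -> eval s (n :: r :: v) y ->
    eval (Prec b s) (S n :: v) y
| eval_mu : forall c v n,
    eval c (n :: v) 0 ->
    (forall m, m < n -> exists k, eval c (m :: v) (S k)) ->
    eval (Mu c) v n
with evals : list code -> list nat -> list nat -> Prop :=
| evals_nil : forall v, evals [] v []
| evals_cons : forall g gs v y ys,
    eval g v y -> evals gs v ys -> evals (g :: gs) v (y :: ys).

Definition computable (h : nat -> nat) : Prop :=
  exists c, forall x, eval c [x] (h x).

Fixpoint iter (f : nat -> nat) (n : nat) (x : nat) : nat :=
  match n with 0 => x | S k => f (iter f k x) end.

Definition preimg_count (f : nat -> nat) (a k : nat) : Prop :=
  exists l : list nat, NoDup l /\ length l = k /\ (forall y, f y = a <-> In y l).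

Definition is_21_1 (f : nat -> nat) : Prop :=
  forall a, preimg_count f a 1 \/ preimg_count f a 2.

Definition cyclic (f : nat -> nat) (x : nat) : Prop :=
  exists n, 0 < n /\ iter f n x = x.

Definition same_orbit (f : nat -> nat) (x y : nat) : Prop :=
  exists m n, iter f m x = iter f n y.

(** a Z-chain is an orbit with no cyclic element *)
Definition no_Z_chains (f : nat -> nat) : Prop :=
  forall x, exists y, same_orbit f x y /\ cyclic f y.

Definition beta_computable (f : nat -> nat) : Prop :=
  exists b, computable b /\ forall a, preimg_count f a (b a).

Definition in_Lambda (f : nat -> nat) (x : nat) : Prop := preimg_count f x 2.

Definition in_tree (f : nat -> nat) (x a : nat) : Prop :=
  exists n, iter f n a = x.

Definition tree_edge (f : nat -> nat) (x a b : nat) : Prop :=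
  in_tree f x a /\ in_tree f x b /\ f a = b.

Definition tree_iso (f : nat -> nat) (x1 x2 : nat) : Prop :=
  exists h : nat -> nat,
    (forall a, in_tree f x1 a -> in_tree f x2 (h a)) /\
    (forall a b, in_tree f x1 a -> in_tree f x1 b -> h a = h b -> a = b) /\
    (forall c, in_tree f x2 c -> exists a, in_tree f x1 a /\ h a = c) /\
    (forall a b, in_tree f x1 a -> in_tree f x1 b ->
       (tree_edge f x1 a b <-> tree_edge f x2 (h a) (h b))).

(** iso_A is computable: it is the restriction to Lambda_A of a partial
    computable function (code c). *)
Definition iso_computable (f : nat -> nat) : Prop :=
  exists c, forall x, in_Lambda f x ->
    forall x1 x2, x1 <> x2 -> f x1 = x -> f x2 = x ->
      exists v, eval c [x] v /\ (v = 0 \/ v = 1) /\ (v = 1 <-> tree_iso f x1 x2).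

Definition struct_iso (f g : nat -> nat) (h : nat -> nat) : Prop :=
  (forall a b, h a = h b -> a = b) /\ (forall c, exists a, h a = c) /\
  (forall x, h (f x) = g (h x)).

From Stdlib Require Import Arith List Lia Wf_nat FunctionalExtensionality Classical ClassicalEpsilon.
Import ListNotations.

(* Both structures consist of fixed points, some of which carry an infinite
   ray ("comets") while the others are isolated.  In [A] the comets are the
   points [comet m _] and every other point is isolated.  [B] differs from [A]
   only in that [target e] receives a ray when the code numbered [e] sends some
   isolated point of [A] to [target e]; whether [t] is the least witness of
   this (an input together with a computation trace) is primitive recursive,
   so [B] is computable.  Both structures have infinitely many comets and
   infinitely many isolated points, hence they are isomorphic.  A computable
   isomorphism [h] with code [e] is impossible: if [h] sends an isolated point
   to [target e], that point has no ray in [A] while [target e] has one in [B];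
   if [h] sends a comet head to [target e], then [target e] has a ray in [B],
   so [h] also sends an isolated point to [target e], contradicting injectivity.
   The branching points of [A] are the comet heads, whose two branches are
   never isomorphic (only one contains a loop), so [iso_A] is constantly [0].

   Computability is established by writing each function as a primitive
   recursive term and compiling the term to a code. *)

(** * Primitive recursive terms *)

(* [Rec n z s] iterates [s] [n] times starting from [z]; the body [s] is
   evaluated in the environment [r :: k :: v], [r] being the previous value and
   [k] the iteration counter.  [Ap1], [Ap2], [Ap3] apply a term of arity 1, 2, 3. *)
Inductive prim : Type :=
| Var : nat -> prim
| Cst : nat -> prim
| Suc : prim -> prim
| Rec : prim -> prim -> prim -> prim
| Ap1 : prim -> prim -> prim
| Ap2 : prim -> prim -> prim -> prim
| Ap3 : prim -> prim -> prim -> prim -> prim.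

Fixpoint sem (e : prim) (v : list nat) : nat :=
  match e with
  | Var i => nth i v 0
  | Cst n => n
  | Suc a => S (sem a v)
  | Rec n z s => nat_rect (fun _ => nat) (sem z v) (fun k r => sem s (r :: k :: v)) (sem n v)
  | Ap1 b a => sem b [sem a v]
  | Ap2 b a1 a2 => sem b [sem a1 v; sem a2 v]
  | Ap3 b a1 a2 a3 => sem b [sem a1 v; sem a2 v; sem a3 v]
  end.

Lemma sem_Var i v : sem (Var i) v = nth i v 0. Proof. reflexivity. Qed.
Lemma sem_Cst n v : sem (Cst n) v = n. Proof. reflexivity. Qed.
Lemma sem_Suc a v : sem (Suc a) v = S (sem a v). Proof. reflexivity. Qed.
Lemma sem_Ap1 b a v : sem (Ap1 b a) v = sem b [sem a v]. Proof. reflexivity. Qed.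
Lemma sem_Ap2 b a1 a2 v : sem (Ap2 b a1 a2) v = sem b [sem a1 v; sem a2 v].
Proof. reflexivity. Qed.
Lemma sem_Ap3 b a1 a2 a3 v : sem (Ap3 b a1 a2 a3) v = sem b [sem a1 v; sem a2 v; sem a3 v].
Proof. reflexivity. Qed.

(* Rewriting rather than [cbn]: conversion problems between [sem] of a term
   and the function it computes are expensive for the kernel. *)
Ltac sem_simpl :=
  repeat (rewrite sem_Var || rewrite sem_Cst || rewrite sem_Suc || rewrite sem_Ap1
          || rewrite sem_Ap2 || rewrite sem_Ap3); cbn [nth].

Fixpoint scoped (m : nat) (e : prim) : bool :=
  match e with
  | Var i => i <? m
  | Cst _ => true
  | Suc a => scoped m a
  | Rec n z s => scoped m n && scoped m z && scoped (S (S m)) s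
  | Ap1 b a => scoped 1 b && scoped m a
  | Ap2 b a1 a2 => scoped 2 b && scoped m a1 && scoped m a2
  | Ap3 b a1 a2 a3 => scoped 3 b && scoped m a1 && scoped m a2 && scoped m a3
  end.

Fixpoint const_code (n : nat) : code :=
  match n with 0 => Zero | S k => Comp Succ [const_code k] end.

Fixpoint proj_codes (a m : nat) : list code :=
  match m with 0 => [] | S m' => Proj a :: proj_codes (S a) m' end.

Fixpoint compile (m : nat) (e : prim) : code :=
  match e with
  | Var i => Proj i
  | Cst n => const_code n
  | Suc a => Comp Succ [compile m a]
  | Rec n z s =>
      Comp (Prec (compile m z) (Comp (compile (S (S m)) s) (Proj 1 :: Proj 0 :: proj_codes 2 m)))
           (compile m n :: proj_codes 0 m)
  | Ap1 b a => Comp (compile 1 b) [compile m a]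
  | Ap2 b a1 a2 => Comp (compile 2 b) [compile m a1; compile m a2]
  | Ap3 b a1 a2 a3 => Comp (compile 3 b) [compile m a1; compile m a2; compile m a3]
  end.

Lemma eval_const_code n v : eval (const_code n) v n.
Proof.
  induction n; simpl.
  - constructor.
  - econstructor; [constructor; [exact IHn | constructor] | constructor].
Qed.

Lemma evals_proj_codes v pre : evals (proj_codes (length pre) (length v)) (pre ++ v) v.
Proof.
  revert pre; induction v as [|a v IH]; intros pre; simpl; constructor.
  - assert (E : nth (length pre) (pre ++ a :: v) 0 = a).
    { rewrite app_nth2, Nat.sub_diag by lia. reflexivity. }
    rewrite <- E at 2. constructor. rewrite length_app; simpl; lia.
  - specialize (IH (pre ++ [a])). rewrite length_app, <- app_assoc in IH. simpl in IH.
    rewrite Nat.add_1_r in IH. exact IH.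
Qed.

Lemma evals_proj_codes0 v : evals (proj_codes 0 (length v)) v v.
Proof. exact (evals_proj_codes v []). Qed.

Lemma eval_compile e m v : scoped m e = true -> length v = m -> eval (compile m e) v (sem e v).
Proof.
  revert m v; induction e; intros m v Hs Hl; simpl in *;
    repeat match goal with H : (_ && _)%bool = true |- _ => apply andb_prop in H as [? ?] end.
  - constructor. apply Nat.ltb_lt in Hs. lia.
  - apply eval_const_code.
  - econstructor; [constructor; [apply IHe; eauto | constructor] | constructor].
  - econstructor.
    + constructor; [apply IHe1; eauto|]. subst m. apply evals_proj_codes0.
    + induction (sem e1 v) as [|k IHk]; simpl.
      * constructor. apply IHe2; auto.
      * econstructor; [exact IHk|]. econstructor.
        -- do 2 (constructor; [constructor; simpl; lia|]).
           subst m. exact (evals_proj_codes v [_; _]).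
        -- apply IHe3; simpl; auto.
  - econstructor; [constructor; [apply IHe2; eauto | constructor] | apply IHe1; auto].
  - econstructor; [|apply IHe1; auto].
    repeat constructor; [apply IHe2 | apply IHe3]; eauto.
  - econstructor; [|apply IHe1; auto].
    repeat constructor; [apply IHe2 | apply IHe3 | apply IHe4]; eauto.
Qed.

Lemma computable_sem e : scoped 1 e = true -> computable (fun x => sem e [x]).
Proof. intros H. exists (compile 1 e). intros x. apply eval_compile; auto. Qed.

Definition PRED := Rec (Var 0) (Cst 0) (Var 1).
Definition ADD := Rec (Var 0) (Var 1) (Suc (Var 0)).
Definition SUB := Rec (Var 1) (Var 0) (Ap1 PRED (Var 0)).
Definition MUL := Rec (Var 0) (Cst 0) (Ap2 ADD (Var 0) (Var 3)).
Definition ISZERO := Rec (Var 0) (Cst 1) (Cst 0).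
Definition IF := Rec (Var 0) (Var 2) (Var 3).
Definition EQB := Ap1 ISZERO (Ap2 ADD (Ap2 SUB (Var 0) (Var 1)) (Ap2 SUB (Var 1) (Var 0))).

Lemma sem_PRED x : sem PRED [x] = pred x.
Proof. destruct x; reflexivity. Qed.

Lemma sem_ADD x y : sem ADD [x; y] = x + y.
Proof. induction x; simpl in *; auto. Qed.

Lemma sem_SUB x y : sem SUB [x; y] = x - y.
Proof.
  induction y; cbn [sem SUB nth nat_rect] in *; [lia|].
  rewrite sem_PRED, IHy. lia.
Qed.

Lemma sem_MUL x y : sem MUL [x; y] = x * y.
Proof. induction x; cbn [sem MUL nth nat_rect] in *; auto. rewrite sem_ADD, IHx. lia. Qed.

Lemma sem_ISZERO x : sem ISZERO [x] = if x =? 0 then 1 else 0.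
Proof. destruct x; reflexivity. Qed.

Lemma sem_IF c a b : sem IF [c; a; b] = match c with 0 => b | S _ => a end.
Proof. destruct c; reflexivity. Qed.

Lemma sem_EQB a b : sem EQB [a; b] = if a =? b then 1 else 0.
Proof.
  cbn [sem EQB nth]. rewrite !sem_SUB, sem_ADD, sem_ISZERO.
  destruct (Nat.eqb_spec a b), (Nat.eqb_spec (a - b + (b - a)) 0); auto; lia.
Qed.

(** * Cantor pairing *)

Fixpoint tri n := match n with 0 => 0 | S k => tri k + S k end.

Definition cpair a b := tri (a + b) + b.

(* [diag n] is the largest [w] with [tri w <= n], i.e. the diagonal containing [n]. *)
Fixpoint diag n :=
  match n with 0 => 0 | S k => if tri (S (diag k)) =? S k then S (diag k) else diag k end.

Definition csnd n := n - tri (diag n).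
Definition cfst n := diag n - csnd n.

Lemma tri_mono a b : a <= b -> tri a <= tri b.
Proof. induction 1; simpl; lia. Qed.

Lemma diag_spec n : tri (diag n) <= n < tri (S (diag n)).
Proof.
  induction n; simpl; [lia|].
  destruct (Nat.eqb_spec (tri (diag n) + S (diag n)) (S n)); simpl in *; lia.
Qed.

Lemma diag_unique n w : tri w <= n < tri (S w) -> diag n = w.
Proof.
  intros H. pose proof (diag_spec n).
  destruct (Nat.lt_trichotomy (diag n) w) as [L|[L|L]]; auto.
  - pose proof (tri_mono (S (diag n)) w L). lia.
  - pose proof (tri_mono (S w) (diag n) L). lia.
Qed.

Lemma diag_cpair a b : diag (cpair a b) = a + b.
Proof. apply diag_unique. unfold cpair. simpl. lia. Qed.

Lemma csnd_cpair a b : csnd (cpair a b) = b.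
Proof. unfold csnd. rewrite diag_cpair. unfold cpair. lia. Qed.

Lemma cfst_cpair a b : cfst (cpair a b) = a.
Proof. unfold cfst. rewrite csnd_cpair, diag_cpair. lia. Qed.

Lemma cpair_eta n : cpair (cfst n) (csnd n) = n.
Proof.
  pose proof (diag_spec n). unfold cfst, csnd, cpair. simpl in *.
  replace (diag n - (n - tri (diag n)) + (n - tri (diag n))) with (diag n) by lia. lia.
Qed.

Lemma cpair_inj a b c d : cpair a b = cpair c d -> a = c /\ b = d.
Proof.
  intros H. split.
  - rewrite <- (cfst_cpair a b), H. apply cfst_cpair.
  - rewrite <- (csnd_cpair a b), H. apply csnd_cpair.
Qed.

Lemma cpair_ge_l a b : a <= cpair a b.
Proof.
  unfold cpair. assert (a <= tri a) by (induction a; simpl; lia).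
  pose proof (tri_mono a (a + b)). lia.
Qed.

Lemma cpair_ge_r a b : b <= cpair a b.
Proof. unfold cpair; lia. Qed.

Ltac simpl_cpair := repeat (rewrite cfst_cpair || rewrite csnd_cpair).

Definition TRI := Rec (Var 0) (Cst 0) (Ap2 ADD (Var 0) (Suc (Var 1))).
Definition CPAIR := Ap2 ADD (Ap1 TRI (Ap2 ADD (Var 0) (Var 1))) (Var 1).
Definition DIAG :=
  Rec (Var 0) (Cst 0) (Ap3 IF (Ap2 EQB (Ap1 TRI (Suc (Var 0))) (Suc (Var 1))) (Suc (Var 0)) (Var 0)).
Definition CSND := Ap2 SUB (Var 0) (Ap1 TRI (Ap1 DIAG (Var 0))).
Definition CFST := Ap2 SUB (Ap1 DIAG (Var 0)) (Ap1 CSND (Var 0)).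

Lemma sem_TRI n : sem TRI [n] = tri n.
Proof. induction n; cbn [sem TRI nth nat_rect] in *; auto. rewrite sem_ADD, IHn. auto. Qed.

Lemma sem_CPAIR a b : sem CPAIR [a; b] = cpair a b.
Proof. cbn [sem CPAIR nth]. rewrite !sem_ADD, sem_TRI. reflexivity. Qed.

Lemma sem_DIAG n : sem DIAG [n] = diag n.
Proof.
  cbn [sem DIAG nth]. induction n; [reflexivity|]. cbn [nat_rect sem nth].
  rewrite sem_IF, sem_EQB, sem_TRI, IHn. cbn [diag]. destruct (_ =? _); reflexivity.
Qed.

Lemma sem_CSND n : sem CSND [n] = csnd n.
Proof. cbn [sem CSND nth]. rewrite sem_SUB, sem_TRI, sem_DIAG. reflexivity. Qed.

Lemma sem_CFST n : sem CFST [n] = cfst n.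
Proof. cbn [sem CFST nth]. rewrite sem_SUB, sem_DIAG, sem_CSND. reflexivity. Qed.

(** * Lists coded by [[] = 0] and [a :: l = S (cpair a l)] *)

Definition lhd n := cfst (pred n).
Definition ltl n := csnd (pred n).
Definition lcons a l := S (cpair a l).
Fixpoint ldrop i l := match i with 0 => l | S k => ltl (ldrop k l) end.
Definition lnth i l := lhd (ldrop i l).

Fixpoint enc_list (l : list nat) : nat :=
  match l with [] => 0 | a :: l' => lcons a (enc_list l') end.

Definition LHD := Ap1 CFST (Ap1 PRED (Var 0)).
Definition LTL := Ap1 CSND (Ap1 PRED (Var 0)).
Definition LCONS := Suc CPAIR.
Definition LDROP := Rec (Var 0) (Var 1) (Ap1 LTL (Var 0)).
Definition LNTH := Ap1 LHD LDROP.

Lemma sem_LHD n : sem LHD [n] = lhd n.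
Proof. cbn [sem LHD nth]. rewrite sem_PRED, sem_CFST. reflexivity. Qed.

Lemma sem_LTL n : sem LTL [n] = ltl n.
Proof. cbn [sem LTL nth]. rewrite sem_PRED, sem_CSND. reflexivity. Qed.

Lemma sem_LCONS a l : sem LCONS [a; l] = lcons a l.
Proof. cbn [sem LCONS]. rewrite sem_CPAIR. reflexivity. Qed.

Lemma sem_LDROP i l : sem LDROP [i; l] = ldrop i l.
Proof. induction i; cbn [sem LDROP nth nat_rect] in *; auto. rewrite sem_LTL, IHi. reflexivity. Qed.

Lemma sem_LNTH i l : sem LNTH [i; l] = lnth i l.
Proof. cbn [sem LNTH]. rewrite sem_LDROP, sem_LHD. reflexivity. Qed.

Lemma lhd_lcons a l : lhd (lcons a l) = a.
Proof. apply cfst_cpair. Qed.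

Lemma ltl_lcons a l : ltl (lcons a l) = l.
Proof. apply csnd_cpair. Qed.

Lemma lcons_eta n : n <> 0 -> lcons (lhd n) (ltl n) = n.
Proof. intros. unfold lcons, lhd, ltl. rewrite cpair_eta. lia. Qed.

Lemma ltl_lt n : n <> 0 -> ltl n < n.
Proof.
  intros H. unfold ltl. pose proof (cpair_eta (pred n)).
  pose proof (cpair_ge_r (cfst (pred n)) (csnd (pred n))). lia.
Qed.

Lemma ldrop_S i l : ldrop (S i) l = ldrop i (ltl l).
Proof. revert l; induction i; intros; simpl in *; auto. Qed.

Lemma ldrop_0 i : ldrop i 0 = 0.
Proof. induction i; simpl; auto. rewrite IHi. reflexivity. Qed.

Lemma ldrop_lt i n : ldrop i n <> 0 -> i < n.
Proof.
  revert n; induction i; intros n H; [simpl in *; lia|].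
  rewrite ldrop_S in H. specialize (IHi _ H).
  destruct n; [change (ltl 0) with 0 in IHi; lia|]. pose proof (ltl_lt (S n)). lia.
Qed.

Lemma lnth_enc_list l j : lnth j (enc_list l) = nth j l 0.
Proof.
  unfold lnth. revert j; induction l; intros j; simpl.
  - rewrite ldrop_0. destruct j; reflexivity.
  - destruct j; [apply lhd_lcons|]. rewrite ldrop_S, ltl_lcons. apply IHl.
Qed.

Lemma ldrop_enc_list_neq0 l i : ldrop i (enc_list l) <> 0 <-> i < length l.
Proof.
  revert i; induction l; intros i; simpl.
  - rewrite ldrop_0. lia.
  - destruct i; [simpl; unfold lcons; lia|].
    rewrite ldrop_S, ltl_lcons, IHl. lia.
Qed.

Lemma length_le_enc_list l : length l <= enc_list l.
Proof. induction l; simpl; auto. pose proof (cpair_ge_r a (enc_list l)). unfold lcons. lia. Qed.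

Lemma enc_list_nil l : enc_list l = 0 -> l = [].
Proof. destruct l; simpl; auto. discriminate. Qed.

Lemma enc_list_cons l n :
  enc_list l = n -> n <> 0 -> exists w, l = lhd n :: w /\ enc_list w = ltl n.
Proof.
  intros H Hn. destruct l as [|a w]; simpl in H; [lia|]. subst.
  exists w. rewrite lhd_lcons, ltl_lcons. auto.
Qed.

(** * Bounded quantification *)

Definition holds (e : prim) (v : list nat) : Prop := sem e v <> 0.

Fixpoint shift (c : nat) (e : prim) : prim :=
  match e with
  | Var i => if i <? c then Var i else Var (S i)
  | Cst n => Cst n
  | Suc a => Suc (shift c a)
  | Rec n z s => Rec (shift c n) (shift c z) (shift (S (S c)) s)
  | Ap1 b a => Ap1 b (shift c a)
  | Ap2 b a1 a2 => Ap2 b (shift c a1) (shift c a2)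
  | Ap3 b a1 a2 a3 => Ap3 b (shift c a1) (shift c a2) (shift c a3)
  end.

Lemma sem_shift e pre x v : sem (shift (length pre) e) (pre ++ x :: v) = sem e (pre ++ v).
Proof.
  revert pre; induction e; intros pre; simpl;
    try (rewrite ?IHe, ?IHe1, ?IHe2, ?IHe3, ?IHe4; reflexivity).
  - destruct (Nat.ltb_spec n (length pre)); simpl.
    + rewrite !app_nth1 by lia. reflexivity.
    + rewrite !app_nth2 by lia. replace (S n - length pre) with (S (n - length pre)) by lia.
      reflexivity.
  - rewrite IHe1, IHe2. induction (sem e1 (pre ++ v)) as [|k IHk]; simpl; auto.
    rewrite IHk. apply (IHe3 (_ :: _ :: pre)).
Qed.

Lemma sem_shift0 e x v : sem (shift 0 e) (x :: v) = sem e v.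
Proof. exact (sem_shift e [] x v). Qed.

Definition BEX (n P : prim) := Rec n (Cst 0) (Ap3 IF (Var 0) (Cst 1) (shift 0 P)).
Definition NOT (a : prim) := Ap1 ISZERO a.
Definition BALL (n P : prim) := NOT (BEX n (NOT P)).
Definition AND (a b : prim) := Ap2 MUL a b.
Definition OR (a b : prim) := Ap2 ADD a b.
Definition EQ (a b : prim) := Ap2 EQB a b.

Lemma holds_BEX n P v : holds (BEX n P) v <-> exists j, j < sem n v /\ holds P (j :: v).
Proof.
  unfold holds, BEX. cbn [sem]. induction (sem n v) as [|N IHN]; cbn [nat_rect].
  - split; [lia | intros [j [H _]]; lia].
  - cbn [sem nth]. rewrite sem_IF, sem_shift0.
    destruct (nat_rect _ _ _ N) eqn:E.
    + split.
      * intros H. exists N. auto.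
      * intros [j [H1 H2]]. destruct (Nat.eq_dec j N) as [->|]; auto.
        exfalso. apply (proj2 IHN); [exists j; split; auto; lia | reflexivity].
    + split; intros _; [|discriminate].
      destruct (proj1 IHN ltac:(discriminate)) as [j [H1 H2]]. exists j. split; auto.
Qed.

Lemma holds_NOT a v : holds (NOT a) v <-> sem a v = 0.
Proof.
  unfold holds, NOT. cbn [sem nth]. rewrite sem_ISZERO.
  destruct (sem a v); simpl; split; auto; lia.
Qed.

Lemma holds_BALL n P v : holds (BALL n P) v <-> forall j, j < sem n v -> holds P (j :: v).
Proof.
  unfold BALL. rewrite holds_NOT.
  assert (H := holds_BEX n (NOT P) v). unfold holds in *. setoid_rewrite holds_NOT in H.
  split.
  - intros E j Hj Hp. apply (proj2 H); [exists j; auto | exact E].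
  - intros Hall. destruct (sem (BEX n (NOT P)) v) eqn:E; auto.
    exfalso. destruct (proj1 H ltac:(discriminate)) as [j [Hj Hp]]. apply (Hall j Hj Hp).
Qed.

Lemma holds_AND a b v : holds (AND a b) v <-> holds a v /\ holds b v.
Proof. unfold holds, AND. cbn [sem nth]. rewrite sem_MUL, Nat.mul_eq_0. tauto. Qed.

Lemma holds_OR a b v : holds (OR a b) v <-> holds a v \/ holds b v.
Proof. unfold holds, OR. cbn [sem nth]. rewrite sem_ADD. lia. Qed.

Lemma holds_EQ a b v : holds (EQ a b) v <-> sem a v = sem b v.
Proof.
  unfold holds, EQ. cbn [sem nth]. rewrite sem_EQB.
  destruct (Nat.eqb_spec (sem a v) (sem b v)); split; auto; lia.
Qed.

(** * Computation traces *)

Fixpoint enc (c : code) : nat :=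
  match c with
  | Zero => cpair 0 0
  | Succ => cpair 1 0
  | Proj i => cpair 2 i
  | Comp h gs => cpair 3 (cpair (enc h) (enc_list (map enc gs)))
  | Prec b s => cpair 4 (cpair (enc b) (enc s))
  | Mu c => cpair 5 (enc c)
  end.

Definition entry k c v y := cpair k (cpair c (cpair v y)).
Definition ekind J := cfst J.
Definition ecode J := cfst (csnd J).
Definition eargs J := cfst (csnd (csnd J)).
Definition eout J := csnd (csnd (csnd J)).

Lemma ekind_entry k c v y : ekind (entry k c v y) = k.
Proof. unfold ekind, entry. simpl_cpair. reflexivity. Qed.
Lemma ecode_entry k c v y : ecode (entry k c v y) = c.
Proof. unfold ecode, entry. simpl_cpair. reflexivity. Qed.
Lemma eargs_entry k c v y : eargs (entry k c v y) = v.
Proof. unfold eargs, entry. simpl_cpair. reflexivity. Qed.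
Lemma eout_entry k c v y : eout (entry k c v y) = y.
Proof. unfold eout, entry. simpl_cpair. reflexivity. Qed.

(* An entry [entry 0 c v y] claims [eval c v y], an entry [entry 1 gs v ys]
   claims [evals gs v ys] (codes, lists of codes and lists of numbers being
   read through [enc] and [enc_list]).  [justified L i] says that the entry
   [L i] follows from entries at earlier positions by one rule of [eval] or
   [evals]; the seven disjuncts of the first kind are the rules of [eval]. *)
Definition justified (L : nat -> nat) (i : nat) : Prop :=
  let J := L i in
  let c := ecode J in let v := eargs J in let y := eout J in
  let tag := cfst c in let arg := csnd c in
  (ekind J = 0 /\
    ((tag = 0 /\ y = 0) \/
     (tag = 1 /\ v <> 0 /\ y = S (lhd v)) \/
     (tag = 2 /\ ldrop arg v <> 0 /\ y = lhd (ldrop arg v)) \/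
     (tag = 3 /\ exists j, j < i /\ exists l, l < i /\
        L j = entry 1 (csnd arg) v (eout (L j)) /\ L l = entry 0 (cfst arg) (eout (L j)) y) \/
     (tag = 4 /\ v <> 0 /\ lhd v = 0 /\ exists j, j < i /\ L j = entry 0 (cfst arg) (ltl v) y) \/
     (tag = 4 /\ v <> 0 /\ lhd v <> 0 /\ exists j, j < i /\ exists l, l < i /\
        L j = entry 0 c (lcons (pred (lhd v)) (ltl v)) (eout (L j)) /\
        L l = entry 0 (csnd arg) (lcons (pred (lhd v)) (lcons (eout (L j)) (ltl v))) y) \/
     (tag = 5 /\ (exists j, j < i /\ L j = entry 0 arg (lcons y v) 0) /\
        forall m, m < y -> exists j, j < i /\
          L j = entry 0 arg (lcons m v) (eout (L j)) /\ eout (L j) <> 0)))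
  \/ (ekind J = 1 /\
       ((c = 0 /\ y = 0) \/
        (c <> 0 /\ y <> 0 /\ exists j, j < i /\ exists l, l < i /\
           L j = entry 0 (lhd c) v (lhd y) /\ L l = entry 1 (ltl c) v (ltl y)))).

Definition justified_at (T i : nat) : Prop := justified (fun j => lnth j T) i.

(* The terms below are read in the environment [i :: T] extended by [d]
   bound variables: [CUR d] is the entry at position [i], [AT d x] the one at [x]. *)
Definition CUR d := Ap2 LNTH (Var d) (Var (S d)).
Definition AT d x := Ap2 LNTH x (Var (S d)).
Definition KIND J := Ap1 CFST J.
Definition CODE J := Ap1 CFST (Ap1 CSND J).
Definition ARGS J := Ap1 CFST (Ap1 CSND (Ap1 CSND J)).
Definition OUT J := Ap1 CSND (Ap1 CSND (Ap1 CSND J)).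
Definition ENTRY k c v y := Ap2 CPAIR k (Ap2 CPAIR c (Ap2 CPAIR v y)).
Definition TAG d := Ap1 CFST (CODE (CUR d)).
Definition ARG d := Ap1 CSND (CODE (CUR d)).

Definition JUST_EVAL :=
 OR (AND (EQ (TAG 0) (Cst 0)) (EQ (OUT (CUR 0)) (Cst 0)))
 (OR (AND (EQ (TAG 0) (Cst 1))
          (AND (ARGS (CUR 0)) (EQ (OUT (CUR 0)) (Suc (Ap1 LHD (ARGS (CUR 0)))))))
 (OR (AND (EQ (TAG 0) (Cst 2))
          (AND (Ap2 LDROP (ARG 0) (ARGS (CUR 0)))
               (EQ (OUT (CUR 0)) (Ap1 LHD (Ap2 LDROP (ARG 0) (ARGS (CUR 0)))))))
 (OR (AND (EQ (TAG 0) (Cst 3)) (BEX (Var 0) (BEX (Var 1)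
        (AND (EQ (AT 2 (Var 1)) (ENTRY (Cst 1) (Ap1 CSND (ARG 2)) (ARGS (CUR 2)) (OUT (AT 2 (Var 1)))))
             (EQ (AT 2 (Var 0)) (ENTRY (Cst 0) (Ap1 CFST (ARG 2)) (OUT (AT 2 (Var 1))) (OUT (CUR 2))))))))
 (OR (AND (EQ (TAG 0) (Cst 4)) (AND (ARGS (CUR 0)) (AND (NOT (Ap1 LHD (ARGS (CUR 0))))
        (BEX (Var 0)
          (EQ (AT 1 (Var 0)) (ENTRY (Cst 0) (Ap1 CFST (ARG 1)) (Ap1 LTL (ARGS (CUR 1))) (OUT (CUR 1))))))))
 (OR (AND (EQ (TAG 0) (Cst 4)) (AND (ARGS (CUR 0)) (AND (Ap1 LHD (ARGS (CUR 0))) (BEX (Var 0) (BEX (Var 1)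
        (AND (EQ (AT 2 (Var 1))
                 (ENTRY (Cst 0) (CODE (CUR 2))
                    (Ap2 LCONS (Ap1 PRED (Ap1 LHD (ARGS (CUR 2)))) (Ap1 LTL (ARGS (CUR 2))))
                    (OUT (AT 2 (Var 1)))))
             (EQ (AT 2 (Var 0))
                 (ENTRY (Cst 0) (Ap1 CSND (ARG 2))
                    (Ap2 LCONS (Ap1 PRED (Ap1 LHD (ARGS (CUR 2))))
                       (Ap2 LCONS (OUT (AT 2 (Var 1))) (Ap1 LTL (ARGS (CUR 2)))))
                    (OUT (CUR 2))))))))))
     (AND (EQ (TAG 0) (Cst 5))
        (AND (BEX (Var 0)
               (EQ (AT 1 (Var 0)) (ENTRY (Cst 0) (ARG 1) (Ap2 LCONS (OUT (CUR 1)) (ARGS (CUR 1))) (Cst 0))))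
             (BALL (OUT (CUR 0)) (BEX (Var 1)
               (AND (EQ (AT 2 (Var 0))
                        (ENTRY (Cst 0) (ARG 2) (Ap2 LCONS (Var 1) (ARGS (CUR 2))) (OUT (AT 2 (Var 0)))))
                    (OUT (AT 2 (Var 0))))))))))))).

Definition JUST_EVALS :=
 OR (AND (EQ (CODE (CUR 0)) (Cst 0)) (EQ (OUT (CUR 0)) (Cst 0)))
    (AND (CODE (CUR 0)) (AND (OUT (CUR 0)) (BEX (Var 0) (BEX (Var 1)
       (AND (EQ (AT 2 (Var 1))
                (ENTRY (Cst 0) (Ap1 LHD (CODE (CUR 2))) (ARGS (CUR 2)) (Ap1 LHD (OUT (CUR 2)))))
            (EQ (AT 2 (Var 0))
                (ENTRY (Cst 1) (Ap1 LTL (CODE (CUR 2))) (ARGS (CUR 2)) (Ap1 LTL (OUT (CUR 2)))))))))).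

Definition JUSTIFIED :=
  OR (AND (EQ (KIND (CUR 0)) (Cst 0)) JUST_EVAL) (AND (EQ (KIND (CUR 0)) (Cst 1)) JUST_EVALS).

Lemma iff_and A B A' B' : (A <-> A') -> (B <-> B') -> (A /\ B <-> A' /\ B').
Proof. tauto. Qed.
Lemma iff_or A B A' B' : (A <-> A') -> (B <-> B') -> (A \/ B <-> A' \/ B').
Proof. tauto. Qed.
Lemma iff_ex (P Q : nat -> Prop) : (forall x, P x <-> Q x) -> ((exists x, P x) <-> exists x, Q x).
Proof. intros H. split; intros [x Hx]; exists x; apply H; auto. Qed.
Lemma iff_all (P Q : nat -> Prop) : (forall x, P x <-> Q x) -> ((forall x, P x) <-> forall x, Q x).
Proof. intros H. split; intros H1 x; apply H; auto. Qed.
Lemma iff_imp A B A' B' : (A <-> A') -> (B <-> B') -> ((A -> B) <-> (A' -> B')).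
Proof. tauto. Qed.

Ltac sem_leaf :=
  unfold holds, TAG, ARG, CUR, AT, KIND, CODE, ARGS, OUT, ENTRY; sem_simpl;
  rewrite ?sem_LNTH, ?sem_CFST, ?sem_CSND, ?sem_LHD, ?sem_LTL, ?sem_CPAIR, ?sem_LCONS,
    ?sem_PRED, ?sem_LDROP;
  match goal with |- ?a <-> ?b => constr_eq a b; apply iff_refl end.

Ltac holds_iff :=
  match goal with
  | |- holds (OR _ _) _ <-> _ \/ _ => rewrite holds_OR; apply iff_or
  | |- holds (AND _ _) _ <-> _ /\ _ => rewrite holds_AND; apply iff_and
  | |- holds (BEX _ _) _ <-> exists _, _ => rewrite holds_BEX; apply iff_ex; intro; apply iff_and
  | |- holds (BALL _ _) _ <-> forall _, _ => rewrite holds_BALL; apply iff_all; intro; apply iff_imp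
  | |- holds (EQ _ _) _ <-> _ => rewrite holds_EQ; sem_leaf
  | |- holds (NOT _) _ <-> _ => rewrite holds_NOT; sem_leaf
  | |- _ => sem_leaf
  end.

Lemma holds_JUSTIFIED T i : holds JUSTIFIED [i; T] <-> justified_at T i.
Proof.
  unfold JUSTIFIED, JUST_EVAL, JUST_EVALS, justified_at, justified,
    entry, ekind, ecode, eargs, eout.
  cbv zeta. repeat holds_iff.
Qed.

Definition valid_trace (T : nat) : Prop :=
  forall i, i < T -> ldrop i T <> 0 -> justified_at T i.

Definition VALID :=
  BALL (Var 0) (OR (NOT (Ap2 LDROP (Var 0) (Var 1))) (Ap2 JUSTIFIED (Var 0) (Var 1))).

Lemma holds_VALID T : holds VALID [T] <-> valid_trace T.
Proof.
  unfold VALID, valid_trace. rewrite holds_BALL. sem_simpl.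
  apply iff_all. intros i. apply iff_imp; [reflexivity|].
  rewrite holds_OR, holds_NOT, <- holds_JUSTIFIED. unfold holds. sem_simpl.
  rewrite sem_LDROP. destruct (ldrop i T); split; intuition lia.
Qed.

Definition entry_true (J : nat) : Prop :=
  (ekind J = 0 -> forall c v, enc c = ecode J -> enc_list v = eargs J -> eval c v (eout J)) /\
  (ekind J = 1 -> forall gs v, enc_list (map enc gs) = ecode J -> enc_list v = eargs J ->
     exists ys, enc_list ys = eout J /\ evals gs v ys).

Lemma entry_true_eval c0 v0 y c v :
  entry_true (entry 0 c0 v0 y) -> enc c = c0 -> enc_list v = v0 -> eval c v y.
Proof.
  intros [H _] <- <-. rewrite <- (eout_entry 0 (enc c) (enc_list v) y).
  apply H; rewrite ?ekind_entry, ?ecode_entry, ?eargs_entry; auto.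
Qed.

Lemma entry_true_evals c0 v0 y gs v :
  entry_true (entry 1 c0 v0 y) -> enc_list (map enc gs) = c0 -> enc_list v = v0 ->
  exists ys, enc_list ys = y /\ evals gs v ys.
Proof.
  intros [_ H] <- <-. rewrite <- (eout_entry 1 (enc_list (map enc gs)) (enc_list v) y).
  apply H; rewrite ?ekind_entry, ?ecode_entry, ?eargs_entry; auto.
Qed.

(* Positions past the end of a coded trace read as [0 = entry 0 (enc Zero) 0 0],
   which claims the true [eval Zero [] 0]. *)
Lemma entry_true_0 : entry_true 0.
Proof.
  split; [|intros H; discriminate H].
  intros _ c v Hc Hv. change (eout 0) with 0. change (ecode 0) with 0 in Hc.
  change (eargs 0) with 0 in Hv.
  destruct c; simpl in Hc;
    try (match type of Hc with cpair ?a ?b = _ => pose proof (cpair_ge_l a b) end; lia).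
  apply enc_list_nil in Hv. subst. constructor.
Qed.

Ltac case_code Hc :=
  rewrite <- Hc in *; simpl enc in *;
  repeat (rewrite cfst_cpair in * || rewrite csnd_cpair in * ); try discriminate.

Section Soundness.
Variables (L : nat -> nat) (i : nat).
Hypothesis premises_true : forall j, j < i -> entry_true (L j).

Lemma justified_eval_sound c v :
  justified L i -> ekind (L i) = 0 -> enc c = ecode (L i) -> enc_list v = eargs (L i) ->
  eval c v (eout (L i)).
Proof.
  intros HJ Hk Hc Hv. unfold justified in HJ. cbv zeta in HJ.
  destruct HJ as [[_ H]|[Hk' _]]; [|congruence].
  destruct H as [H|[H|[H|[H|[H|[H|H]]]]]].
  - destruct H as [Ht ->]. destruct c; case_code Hc. constructor.
  - destruct H as [Ht [Hvn ->]]. destruct c; case_code Hc.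
    destruct (enc_list_cons v _ Hv Hvn) as [w [-> _]]. constructor.
  - destruct H as [Ht [Hvn ->]]. destruct c; case_code Hc.
    rewrite <- Hv in *. change (lhd (ldrop n (enc_list v))) with (lnth n (enc_list v)).
    rewrite lnth_enc_list. constructor. apply ldrop_enc_list_neq0. auto.
  - destruct H as [Ht [j [Hj [l [Hl [H1 H2]]]]]]. destruct c; case_code Hc.
    pose proof (premises_true j Hj) as Q1. rewrite H1 in Q1.
    destruct (entry_true_evals _ _ _ l0 v Q1 eq_refl Hv) as [ys [Hys Hev]].
    pose proof (premises_true l Hl) as Q2. rewrite H2, <- Hys in Q2.
    econstructor; [exact Hev | apply (entry_true_eval _ _ _ _ _ Q2); auto].
  - destruct H as [Ht [Hvn [Hh [j [Hj H1]]]]]. destruct c; case_code Hc.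
    destruct (enc_list_cons v _ Hv Hvn) as [w [-> Hw]]. rewrite Hh.
    pose proof (premises_true j Hj) as Q1. rewrite H1 in Q1.
    constructor. apply (entry_true_eval _ _ _ _ _ Q1); auto.
  - destruct H as [Ht [Hvn [Hh [j [Hj [l [Hl [H1 H2]]]]]]]]. destruct c; case_code Hc.
    destruct (enc_list_cons v _ Hv Hvn) as [w [-> Hw]].
    destruct (lhd (eargs (L i))) as [|n] eqn:Ehd; [contradiction|]. simpl in H1, H2.
    pose proof (premises_true j Hj) as Q1. rewrite H1 in Q1.
    pose proof (premises_true l Hl) as Q2. rewrite H2 in Q2.
    econstructor.
    + apply (entry_true_eval _ _ _ _ _ Q1); [reflexivity | simpl; rewrite Hw; reflexivity].
    + apply (entry_true_eval _ _ _ _ _ Q2); [reflexivity | simpl; rewrite Hw; reflexivity].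
  - destruct H as [Ht [[j [Hj H1]] H2]]. destruct c; case_code Hc.
    pose proof (premises_true j Hj) as Q1. rewrite H1 in Q1.
    constructor; [apply (entry_true_eval _ _ _ _ _ Q1); simpl; congruence|].
    intros m Hm. destruct (H2 m Hm) as [j' [Hj' [H3 H4]]].
    destruct (eout (L j')) as [|k] eqn:Ek; [contradiction|]. exists k.
    pose proof (premises_true j' Hj') as Q2. rewrite H3 in Q2.
    apply (entry_true_eval _ _ _ _ _ Q2); simpl; congruence.
Qed.

Lemma justified_evals_sound gs v :
  justified L i -> ekind (L i) = 1 -> enc_list (map enc gs) = ecode (L i) ->
  enc_list v = eargs (L i) -> exists ys, enc_list ys = eout (L i) /\ evals gs v ys.
Proof.
  intros HJ Hk Hc Hv. unfold justified in HJ. cbv zeta in HJ.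
  destruct HJ as [[Hk' _]|[_ H]]; [congruence|].
  destruct H as [[Hc0 Hy]|[Hc0 [Hy [j [Hj [l [Hl [H1 H2]]]]]]]].
  - destruct gs; simpl in Hc; [|unfold lcons in Hc; lia].
    exists []. split; [rewrite Hy; reflexivity | constructor].
  - destruct gs as [|g gs]; simpl in Hc; [rewrite <- Hc in Hc0; contradiction|].
    pose proof (premises_true j Hj) as Q1. rewrite H1, <- Hc, lhd_lcons in Q1.
    pose proof (premises_true l Hl) as Q2. rewrite H2, <- Hc, ltl_lcons in Q2.
    destruct (entry_true_evals _ _ _ gs v Q2 eq_refl Hv) as [ys [Hys Hev]].
    exists (lhd (eout (L i)) :: ys). split.
    + simpl. rewrite Hys. apply lcons_eta. auto.
    + constructor; auto. apply (entry_true_eval _ _ _ _ _ Q1); auto.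
Qed.

Lemma justified_sound : justified L i -> entry_true (L i).
Proof.
  intros HJ. split; intros Hk.
  - intros c v. apply justified_eval_sound; auto.
  - intros gs v. apply justified_evals_sound; auto.
Qed.

End Soundness.

Lemma valid_trace_sound T : valid_trace T -> forall i, entry_true (lnth i T).
Proof.
  intros HV i. induction i as [i IH] using Wf_nat.lt_wf_ind.
  destruct (ldrop i T) eqn:Hn.
  { unfold lnth. rewrite Hn. apply entry_true_0. }
  apply (justified_sound (fun j => lnth j T)); auto.
  apply HV; [apply ldrop_lt|]; congruence.
Qed.

Section Shift.
Variables (L L' : nat -> nat) (i o : nat).
Hypothesis shifted : forall j, j <= i -> L' (j + o) = L j.

Let before_shift (P : nat -> Prop) :
  (exists j, j < i /\ P (L j)) -> exists j, j < i + o /\ P (L' j).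
Proof. intros [j [Hj HP]]. exists (j + o). rewrite shifted by lia. split; auto; lia. Qed.

Let before2_shift (P : nat -> nat -> Prop) :
  (exists j, j < i /\ exists l, l < i /\ P (L j) (L l)) ->
  exists j, j < i + o /\ exists l, l < i + o /\ P (L' j) (L' l).
Proof.
  intros [j [Hj [l [Hl HP]]]]. exists (j + o). split; [lia|]. exists (l + o).
  rewrite !shifted by lia. split; auto; lia.
Qed.

Lemma justified_shift : justified L i -> justified L' (i + o).
Proof.
  unfold justified. cbv zeta. rewrite shifted by lia.
  intros [[Hk H]|[Hk H]]; [left|right]; split; auto.
  - destruct H as [H|[H|[H|[H|[H|[H|H]]]]]]; [left|right; left|right; right; left| | | |];
      auto; do 3 right.
    + left. destruct H as [Ht H]. split; auto.
      exact (before2_shift (fun a b => a = entry 1 _ _ (eout a) /\ b = entry 0 _ (eout a) _) H).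
    + right; left. destruct H as [Ht [Hv [Hh H]]]. repeat split; auto.
      exact (before_shift (fun a => a = _) H).
    + do 2 right; left. destruct H as [Ht [Hv [Hh H]]]. repeat split; auto.
      exact (before2_shift
               (fun a b => a = entry 0 _ _ (eout a) /\ b = entry 0 _ (lcons _ (lcons (eout a) _)) _) H).
    + do 3 right. destruct H as [Ht [H0 Hm]]. repeat split; auto.
      * exact (before_shift (fun a => a = _) H0).
      * intros m Hlt. exact (before_shift (fun a => a = entry 0 _ _ (eout a) /\ eout a <> 0) (Hm m Hlt)).
  - destruct H as [H|[Hc [Hy H]]]; [left; auto|right; repeat split; auto].
    exact (before2_shift (fun a b => a = _ /\ b = _) H).
Qed.

End Shift.

Definition valid_list (T : list nat) : Prop :=
  forall i, i < length T -> justified (fun j => nth j T 0) i.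

Lemma valid_trace_enc_list T : valid_trace (enc_list T) <-> valid_list T.
Proof.
  unfold valid_trace, valid_list, justified_at.
  replace (fun j => lnth j (enc_list T)) with (fun j => nth j T 0)
    by (apply functional_extensionality; intros; symmetry; apply lnth_enc_list).
  split; intros H i Hi.
  - apply H; [pose proof (length_le_enc_list T); lia | apply ldrop_enc_list_neq0; auto].
  - intros Hn. apply H, ldrop_enc_list_neq0, Hn.
Qed.

Lemma valid_list_nil : valid_list [].
Proof. intros i Hi. simpl in Hi. lia. Qed.

Lemma valid_list_app T1 T2 : valid_list T1 -> valid_list T2 -> valid_list (T1 ++ T2).
Proof.
  intros H1 H2 i Hi. rewrite length_app in Hi.
  destruct (Nat.lt_ge_cases i (length T1)).
  - rewrite <- (Nat.add_0_r i). apply (justified_shift (fun j => nth j T1 0)); auto.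
    intros j Hj. rewrite Nat.add_0_r, app_nth1 by lia. reflexivity.
  - replace i with ((i - length T1) + length T1) by lia.
    apply (justified_shift (fun j => nth j T2 0)); [|apply H2; lia].
    intros j Hj. rewrite app_nth2 by lia. f_equal. lia.
Qed.

Lemma valid_list_snoc T J :
  valid_list T -> justified (fun j => nth j (T ++ [J]) 0) (length T) -> valid_list (T ++ [J]).
Proof.
  intros H HJ i Hi. rewrite length_app in Hi. simpl in Hi.
  destruct (Nat.lt_ge_cases i (length T)); [|replace i with (length T) by lia; auto].
  rewrite <- (Nat.add_0_r i). apply (justified_shift (fun j => nth j T 0)); auto.
  intros j Hj. rewrite Nat.add_0_r, app_nth1 by lia. reflexivity.
Qed.

Definition derivable (J : nat) : Prop := exists T, valid_list T /\ In J T.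

Lemma derivable_pair J1 J2 :
  derivable J1 -> derivable J2 -> exists T, valid_list T /\ In J1 T /\ In J2 T.
Proof.
  intros [T1 [V1 I1]] [T2 [V2 I2]]. exists (T1 ++ T2).
  split; [apply valid_list_app; auto | split; apply in_or_app; auto].
Qed.

Lemma derivable_family (F : nat -> nat -> nat) n :
  (forall m, m < n -> exists y, y <> 0 /\ derivable (F m y)) ->
  exists T, valid_list T /\ forall m, m < n -> exists y, y <> 0 /\ In (F m y) T.
Proof.
  induction n as [|n IH]; intros H.
  - exists []. split; [apply valid_list_nil | intros; lia].
  - destruct IH as [T1 [V1 H1]]; [intros m Hm; apply H; lia|].
    destruct (H n (Nat.lt_succ_diag_r n)) as [y [Hy [T2 [V2 I2]]]].
    exists (T1 ++ T2). split; [apply valid_list_app; auto|].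
    intros m Hm. destruct (Nat.eq_dec m n) as [->|Hne].
    + exists y. split; auto. apply in_or_app; auto.
    + destruct (H1 m ltac:(lia)) as [y' [Hy' Hi]]. exists y'. split; auto. apply in_or_app; auto.
Qed.

Lemma in_prefix_index (x J : nat) T :
  In x T -> exists j, j < length T /\ nth j (T ++ [J]) 0 = x.
Proof.
  intros H. destruct (In_nth _ _ 0 H) as [j [Hj E]].
  exists j. rewrite app_nth1; auto.
Qed.

Lemma derivable_by T J :
  valid_list T -> justified (fun j => nth j (T ++ [J]) 0) (length T) -> derivable J.
Proof.
  intros HT HJ. exists (T ++ [J]). split; [apply valid_list_snoc; auto|].
  apply in_or_app. simpl. auto.
Qed.

(* The generated eliminators are not mutual and give no induction hypothesis
   under the existential quantifier of [eval_mu]. *)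
Section EvalInd.
Variable P : code -> list nat -> nat -> Prop.
Variable Q : list code -> list nat -> list nat -> Prop.
Hypothesis Hzero : forall v, P Zero v 0.
Hypothesis Hsucc : forall x v, P Succ (x :: v) (S x).
Hypothesis Hproj : forall i v, i < length v -> P (Proj i) v (nth i v 0).
Hypothesis Hcomp : forall h gs v ys y, Q gs v ys -> P h ys y -> P (Comp h gs) v y.
Hypothesis Hprec0 : forall b s v y, P b v y -> P (Prec b s) (0 :: v) y.
Hypothesis HprecS : forall b s n v r y,
  P (Prec b s) (n :: v) r -> P s (n :: r :: v) y -> P (Prec b s) (S n :: v) y.
Hypothesis Hmu : forall c v n,
  P c (n :: v) 0 -> (forall m, m < n -> exists k, P c (m :: v) (S k)) -> P (Mu c) v n.
Hypothesis Hnil : forall v, Q [] v [].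
Hypothesis Hcons : forall g gs v y ys, P g v y -> Q gs v ys -> Q (g :: gs) v (y :: ys).

Fixpoint eval_mut_ind c v y (H : eval c v y) {struct H} : P c v y :=
  match H in eval c v y return P c v y with
  | eval_zero v => Hzero v
  | eval_succ x v => Hsucc x v
  | eval_proj i v h => Hproj i v h
  | eval_comp h gs v ys y H1 H2 => Hcomp h gs v ys y (evals_mut_ind gs v ys H1) (eval_mut_ind h ys y H2)
  | eval_prec0 b s v y H1 => Hprec0 b s v y (eval_mut_ind b v y H1)
  | eval_precS b s n v r y H1 H2 =>
      HprecS b s n v r y (eval_mut_ind _ _ _ H1) (eval_mut_ind _ _ _ H2)
  | eval_mu c v n H1 H2 => Hmu c v n (eval_mut_ind _ _ _ H1)
      (fun m hm => match H2 m hm with ex_intro _ k Hk => ex_intro _ k (eval_mut_ind _ _ _ Hk) end)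
  end
with evals_mut_ind gs v ys (H : evals gs v ys) {struct H} : Q gs v ys :=
  match H in evals gs v ys return Q gs v ys with
  | evals_nil v => Hnil v
  | evals_cons g gs v y ys H1 H2 => Hcons g gs v y ys (eval_mut_ind _ _ _ H1) (evals_mut_ind _ _ _ H2)
  end.

End EvalInd.

Lemma nth_snoc_last (J : nat) T : nth (length T) (T ++ [J]) 0 = J.
Proof. rewrite app_nth2, Nat.sub_diag by lia. reflexivity. Qed.

Ltac simpl_entry :=
  repeat (rewrite ekind_entry || rewrite ecode_entry || rewrite eargs_entry || rewrite eout_entry
          || rewrite cfst_cpair || rewrite csnd_cpair || rewrite lhd_lcons || rewrite ltl_lcons);
  simpl enc; simpl enc_list; simpl map;
  repeat (rewrite ekind_entry || rewrite ecode_entry || rewrite eargs_entry || rewrite eout_entry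
          || rewrite cfst_cpair || rewrite csnd_cpair || rewrite lhd_lcons || rewrite ltl_lcons).

Ltac justify_last := unfold justified; cbv beta zeta; rewrite nth_snoc_last; simpl_entry.

Ltac premise H :=
  match goal with
  | |- context [?T ++ [?J]] =>
      let j := fresh "j" in let Hj := fresh "Hj" in let E := fresh "E" in
      destruct (in_prefix_index _ J T H) as [j [Hj E]]; exists j; split; [exact Hj|];
      rewrite E; simpl_entry
  end.

Lemma derivable_mu c v n :
  derivable (entry 0 (enc c) (enc_list (n :: v)) 0) ->
  (forall m, m < n -> exists k, derivable (entry 0 (enc c) (enc_list (m :: v)) (S k))) ->
  derivable (entry 0 (enc (Mu c)) (enc_list v) n).
Proof.
  intros [T0 [V0 I0]] Hlt.
  destruct (derivable_family (fun m y => entry 0 (enc c) (enc_list (m :: v)) y) n)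
    as [T1 [V1 H1]].
  { intros m Hm. destruct (Hlt m Hm) as [k Hk]. exists (S k). split; [discriminate | exact Hk]. }
  apply (derivable_by (T0 ++ T1)); [apply valid_list_app; auto|]. justify_last.
  left. split; [reflexivity|]. do 6 right. split; [reflexivity|]. split.
  - premise (in_or_app T0 T1 _ (or_introl I0)). reflexivity.
  - intros m Hm. destruct (H1 m Hm) as [y [Hy Im]].
    premise (in_or_app T0 T1 _ (or_intror Im)). auto.
Qed.

Lemma eval_derivable c v y : eval c v y -> derivable (entry 0 (enc c) (enc_list v) y).
Proof.
  revert c v y.
  apply (eval_mut_ind (fun c v y => derivable (entry 0 (enc c) (enc_list v) y))
    (fun gs v ys => derivable (entry 1 (enc_list (map enc gs)) (enc_list v) (enc_list ys)))).
  - intros v. apply (derivable_by []); [apply valid_list_nil|]. justify_last.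
    left. split; [reflexivity|]. left. auto.
  - intros x v. apply (derivable_by []); [apply valid_list_nil|]. justify_last.
    left. split; [reflexivity|]. right; left. repeat split; auto. discriminate.
  - intros i v Hi. apply (derivable_by []); [apply valid_list_nil|]. justify_last.
    left. split; [reflexivity|]. right; right; left. repeat split.
    + apply ldrop_enc_list_neq0; auto.
    + symmetry. apply lnth_enc_list.
  - intros h gs v ys y IH1 IH2. destruct (derivable_pair _ _ IH1 IH2) as [T [VT [I1 I2]]].
    apply (derivable_by T); auto. justify_last.
    left. split; [reflexivity|]. do 3 right; left. split; [reflexivity|].
    premise I1.
    premise I2. auto.
  - intros b s v y IH. destruct IH as [T [VT I1]].
    apply (derivable_by T); auto. justify_last.
    left. split; [reflexivity|]. do 4 right; left. repeat split; try discriminate.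
    premise I1. auto.
  - intros b s n v r y IH1 IH2. destruct (derivable_pair _ _ IH1 IH2) as [T [VT [I1 I2]]].
    apply (derivable_by T); auto. justify_last.
    left. split; [reflexivity|]. do 5 right; left. repeat split; try discriminate.
    premise I1.
    premise I2. auto.
  - intros c v n IH0 IHlt. apply derivable_mu; auto.
  - intros v. apply (derivable_by []); [apply valid_list_nil|]. justify_last.
    right. split; [reflexivity|]. left. auto.
  - intros g gs v y ys IH1 IH2. destruct (derivable_pair _ _ IH1 IH2) as [T [VT [I1 I2]]].
    apply (derivable_by T); auto. justify_last.
    right. split; [reflexivity|]. right. repeat split; try discriminate.
    premise I1.
    premise I2.
    auto.
Qed.

Lemma eval_deterministic c v y y' : eval c v y -> eval c v y' -> y = y'.
Proof.
  intros H. revert y'. revert c v y H.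
  apply (eval_mut_ind (fun c v y => forall y', eval c v y' -> y = y')
                      (fun gs v ys => forall ys', evals gs v ys' -> ys = ys')).
  - intros v y' H. inversion H; auto.
  - intros x v y' H. inversion H; auto.
  - intros i v _ y' H. inversion H; auto.
  - intros h gs v ys y IH1 IH2 y' H. inversion H; subst. apply IH2. rewrite (IH1 ys0); auto.
  - intros b s v y IH y' H. inversion H; subst. auto.
  - intros b s n v r y IH1 IH2 y' H. inversion H; subst. apply IH2. rewrite (IH1 r0); auto.
  - intros c v n IH1 IH2 y' H. inversion H as [| | | | | |c0 v0 n0 Hy' Hlt]; subst.
    destruct (Nat.lt_trichotomy n y') as [L|[L|L]]; auto.
    + destruct (Hlt n L) as [k Hk]. specialize (IH1 _ Hk). discriminate.
    + destruct (IH2 y' L) as [k Hk]. specialize (Hk _ Hy'). discriminate.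
  - intros v ys' H. inversion H; auto.
  - intros g gs v y ys IH1 IH2 ys' H. inversion H; subst. f_equal; auto.
Qed.

(** * The structures *)

Definition comet m d := cpair 0 (cpair m d).
Definition target e := cpair 1 (cpair e 0).
Definition tail_pt e t d := cpair 1 (cpair e (S (cpair t d))).

Lemma cfst_comet m d : cfst (comet m d) = 0. Proof. apply cfst_cpair. Qed.
Lemma cfst_target e : cfst (target e) = 1. Proof. apply cfst_cpair. Qed.
Lemma cfst_tail e t d : cfst (tail_pt e t d) = 1. Proof. apply cfst_cpair. Qed.

Lemma comet_inj m d m' d' : comet m d = comet m' d' -> m = m' /\ d = d'.
Proof. intros H. apply cpair_inj in H as [_ H]. apply cpair_inj, H. Qed.

Lemma target_inj e e' : target e = target e' -> e = e'.
Proof. intros H. apply cpair_inj in H as [_ H]. apply cpair_inj in H. tauto. Qed.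

Lemma tail_inj e t d e' t' d' : tail_pt e t d = tail_pt e' t' d' -> e = e' /\ t = t' /\ d = d'.
Proof.
  intros H. apply cpair_inj in H as [_ H]. apply cpair_inj in H as [He H].
  injection H as H. apply cpair_inj in H. tauto.
Qed.

Lemma target_neq_tail e e' t d : target e <> tail_pt e' t d.
Proof. intros H. apply cpair_inj in H as [_ H]. apply cpair_inj in H as [_ H]. discriminate. Qed.

Lemma comet_neq_target m d e : comet m d <> target e.
Proof. intros H. apply (f_equal cfst) in H. rewrite cfst_comet, cfst_target in H. discriminate. Qed.

Lemma comet_neq_tail m d e t d' : comet m d <> tail_pt e t d'.
Proof. intros H. apply (f_equal cfst) in H. rewrite cfst_comet, cfst_tail in H. discriminate. Qed.

Lemma comet_eta x : cfst x = 0 -> x = comet (cfst (csnd x)) (csnd (csnd x)).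
Proof. intros H. unfold comet. rewrite !cpair_eta, <- H, cpair_eta. reflexivity. Qed.

Lemma point_cases x :
  (exists m d, x = comet m d) \/ (exists e, x = target e) \/
  (exists e t d, x = tail_pt e t d) \/ 2 <= cfst x.
Proof.
  destruct (cfst x) as [|[|k]] eqn:Hx; [left | right | do 3 right; lia].
  { exists (cfst (csnd x)), (csnd (csnd x)). apply comet_eta, Hx. }
  rewrite <- (cpair_eta x), Hx, <- (cpair_eta (csnd x)).
  destruct (csnd (csnd x)) as [|q]; [left; exists (cfst (csnd x)); reflexivity|].
  right; left. exists (cfst (csnd x)), (cfst q), (csnd q). unfold tail_pt. rewrite cpair_eta. auto.
Qed.

(* A comet is a fixed point [comet m 0] with the ray [comet m (S d) |-> comet m d]
   attached; every other point is fixed, except that a [tail_pt e t _] becomes a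
   ray attached to [target e] when [w e t <> 0]. *)
Definition step (w : nat -> nat -> nat) (x : nat) : nat :=
  let a := cfst (csnd x) in
  match cfst x, csnd (csnd x) with
  | 0, S d => comet a d
  | 1, S q =>
      match w a (cfst q) with
      | 0 => x
      | S _ => match csnd q with 0 => target a | S d => tail_pt a (cfst q) d end
      end
  | _, _ => x
  end.

Section Step.
Variable w : nat -> nat -> nat.

Lemma step_comet0 m : step w (comet m 0) = comet m 0.
Proof. unfold step, comet. simpl_cpair. reflexivity. Qed.

Lemma step_cometS m d : step w (comet m (S d)) = comet m d.
Proof. unfold step, comet. simpl_cpair. reflexivity. Qed.

Lemma step_target e : step w (target e) = target e.
Proof. unfold step, target. simpl_cpair. reflexivity. Qed.

Lemma step_tail e t d :
  step w (tail_pt e t d) =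
  match w e t with
  | 0 => tail_pt e t d
  | S _ => match d with 0 => target e | S d' => tail_pt e t d' end
  end.
Proof. unfold step, tail_pt. simpl_cpair. reflexivity. Qed.

Lemma step_other x : 2 <= cfst x -> step w x = x.
Proof. intros H. unfold step. destruct (cfst x) as [|[|k]]; auto; lia. Qed.

Lemma step_preimage y a : step w y = a ->
  (y = a /\ step w a = a) \/
  (exists m d, y = comet m (S d) /\ a = comet m d) \/
  (exists e t, w e t <> 0 /\ y = tail_pt e t 0 /\ a = target e) \/
  (exists e t d, w e t <> 0 /\ y = tail_pt e t (S d) /\ a = tail_pt e t d).
Proof.
  intros H. destruct (point_cases y) as [[m [d ->]]|[[e ->]|[[e [t [d ->]]]|Hy]]].
  - destruct d; [rewrite step_comet0 in H | rewrite step_cometS in H]; subst.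
    + left. split; auto. apply step_comet0.
    + right; left. eauto.
  - rewrite step_target in H. subst. left. split; auto. apply step_target.
  - rewrite step_tail in H. destruct (w e t) eqn:Ew; subst.
    + left. split; auto. rewrite step_tail, Ew. auto.
    + destruct d; [right; right; left | do 3 right]; repeat eexists; auto; lia.
  - rewrite step_other in H by auto. subst. left. split; auto. apply step_other; auto.
Qed.

Ltac absurd_point :=
  match goal with
  | H : comet _ _ = target _ |- _ => destruct (comet_neq_target _ _ _ H)
  | H : target _ = comet _ _ |- _ => destruct (comet_neq_target _ _ _ (eq_sym H))
  | H : comet _ _ = tail_pt _ _ _ |- _ => destruct (comet_neq_tail _ _ _ _ _ H)
  | H : tail_pt _ _ _ = comet _ _ |- _ => destruct (comet_neq_tail _ _ _ _ _ (eq_sym H))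
  | H : target _ = tail_pt _ _ _ |- _ => destruct (target_neq_tail _ _ _ _ H)
  | H : tail_pt _ _ _ = target _ |- _ => destruct (target_neq_tail _ _ _ _ (eq_sym H))
  end.

Lemma preimg_count_of a l :
  NoDup l -> (forall y, step w y = a <-> In y l) -> preimg_count (step w) a (length l).
Proof. intros. exists l. auto. Qed.

Ltac preimages H :=
  apply step_preimage in H as
    [[-> Hfix]|[[m' [d' [-> Ha]]]|[[e' [t' [Hw [-> Ha]]]]|[e' [t' [d' [Hw [-> Ha]]]]]]]];
  try absurd_point.

Lemma preimg_comet0 m : preimg_count (step w) (comet m 0) 2.
Proof.
  apply (preimg_count_of _ [comet m 0; comet m 1]).
  - constructor; [intros [H|[]]; apply comet_inj in H; lia | repeat constructor; intros []].
  - intros y. split.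
    + intros H. preimages H; [left; auto|]. apply comet_inj in Ha as [-> ->]. right; left; auto.
    + intros [<-|[<-|[]]]; [apply step_comet0 | apply step_cometS].
Qed.

Lemma preimg_cometS m d : preimg_count (step w) (comet m (S d)) 1.
Proof.
  apply (preimg_count_of _ [comet m (S (S d))]); [repeat constructor; intros []|].
  intros y. split.
  - intros H. preimages H.
    + rewrite step_cometS in Hfix. apply comet_inj in Hfix. lia.
    + apply comet_inj in Ha as [-> <-]. left; auto.
  - intros [<-|[]]. apply step_cometS.
Qed.

Lemma preimg_target_hit e t : w e t <> 0 ->
  (forall t', w e t' <> 0 -> t' = t) -> preimg_count (step w) (target e) 2.
Proof.
  intros Ht Huniq. apply (preimg_count_of _ [target e; tail_pt e t 0]).
  - constructor; [intros [H|[]]; absurd_point | repeat constructor; intros []].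
  - intros y. split.
    + intros H. preimages H; [left; auto|].
      apply target_inj in Ha. subst. rewrite (Huniq _ Hw). right; left; auto.
    + intros [<-|[<-|[]]]; [apply step_target|]. rewrite step_tail. destruct (w e t); [lia|auto].
Qed.

Lemma preimg_target_missed e : (forall t, w e t = 0) -> preimg_count (step w) (target e) 1.
Proof.
  intros Ht. apply (preimg_count_of _ [target e]); [repeat constructor; intros []|].
  intros y. split.
  - intros H. preimages H; [left; auto|]. apply target_inj in Ha. subst. rewrite Ht in Hw. lia.
  - intros [<-|[]]. apply step_target.
Qed.

Lemma preimg_tail e t d : preimg_count (step w) (tail_pt e t d) 1.
Proof.
  destruct (w e t) eqn:Ew.
  - apply (preimg_count_of _ [tail_pt e t d]); [repeat constructor; intros []|].
    intros y. split.
    + intros H. preimages H; [left; auto|]. apply tail_inj in Ha as [-> [-> ->]]. lia.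
    + intros [<-|[]]. rewrite step_tail, Ew. auto.
  - apply (preimg_count_of _ [tail_pt e t (S d)]); [repeat constructor; intros []|].
    intros y. split.
    + intros H. preimages H.
      * rewrite step_tail, Ew in Hfix. destruct d; [absurd_point|].
        apply tail_inj in Hfix. lia.
      * apply tail_inj in Ha as [-> [-> ->]]. left; auto.
    + intros [<-|[]]. rewrite step_tail, Ew. auto.
Qed.

Lemma preimg_other x : 2 <= cfst x -> preimg_count (step w) x 1.
Proof.
  intros Hx. apply (preimg_count_of _ [x]); [repeat constructor; intros []|].
  intros y. split.
  - intros H. apply step_preimage in H as
      [[-> _]|[[m' [d' [_ ->]]]|[[e' [t' [_ [_ ->]]]]|[e' [t' [d' [_ [_ ->]]]]]]]];
      [left; auto | rewrite ?cfst_comet, ?cfst_target, ?cfst_tail in Hx; lia ..].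
  - intros [<-|[]]. apply step_other; auto.
Qed.

Lemma step_21_1 : (forall e t t', w e t <> 0 -> w e t' <> 0 -> t = t') -> is_21_1 (step w).
Proof.
  intros Huniq a. destruct (point_cases a) as [[m [[|d] ->]]|[[e ->]|[[e [t [d ->]]]|Ha]]].
  - right. apply preimg_comet0.
  - left. apply preimg_cometS.
  - destruct (classic (exists t, w e t <> 0)) as [[t Ht]|Hn].
    + right. apply (preimg_target_hit e t Ht). intros t' Ht'. apply (Huniq e); auto.
    + left. apply preimg_target_missed. intros t. destruct (w e t) eqn:E; auto.
      exfalso. apply Hn. exists t. lia.
  - left. apply preimg_tail.
  - left. apply preimg_other; auto.
Qed.

End Step.

Definition STEP (W : prim) : prim :=
  let x := Var 0 in
  let a := Ap1 CFST (Ap1 CSND x) in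
  let r := Ap1 CSND (Ap1 CSND x) in
  let q := Ap1 PRED r in
  Ap3 IF (Ap1 CFST x)
    (Ap3 IF (Ap1 PRED (Ap1 CFST x)) x
       (Ap3 IF r
          (Ap3 IF (Ap2 W a (Ap1 CFST q))
             (Ap3 IF (Ap1 CSND q)
                (Ap2 CPAIR (Cst 1)
                   (Ap2 CPAIR a (Suc (Ap2 CPAIR (Ap1 CFST q) (Ap1 PRED (Ap1 CSND q))))))
                (Ap2 CPAIR (Cst 1) (Ap2 CPAIR a (Cst 0))))
             x)
          x))
    (Ap3 IF r (Ap2 CPAIR (Cst 0) (Ap2 CPAIR a (Ap1 PRED r))) x).

Lemma sem_STEP W x : sem (STEP W) [x] = step (fun a b => sem W [a; b]) x.
Proof.
  unfold STEP, step. cbv zeta. sem_simpl.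
  rewrite ?sem_IF, ?sem_CFST, ?sem_CSND, ?sem_PRED, ?sem_CPAIR.
  destruct (cfst x) as [|[|k]]; destruct (csnd (csnd x)) as [|q]; try reflexivity.
  cbn [pred]. destruct (sem W _); [reflexivity|].
  destruct (csnd q); reflexivity.
Qed.

Lemma computable_step W : scoped 2 W = true -> computable (step (fun a b => sem W [a; b])).
Proof.
  intros HW. destruct (computable_sem (STEP W)) as [c Hc].
  - unfold STEP. cbv zeta. cbn [scoped]. rewrite HW. reflexivity.
  - exists c. intros x. rewrite <- sem_STEP. apply Hc.
Qed.

(* [t = cpair z T] witnesses that the code numbered [e] sends the point [z],
   which lies off the comets, to [target e]: the valid trace [T] records it. *)
Definition witness (e t : nat) : Prop :=
  cfst (cfst t) <> 0 /\ valid_trace (csnd t) /\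
  exists i, i < csnd t /\ ldrop i (csnd t) <> 0 /\
    lnth i (csnd t) = entry 0 e (lcons (cfst t) 0) (target e).

Definition WITNESS :=
  AND (Ap1 CFST (Ap1 CFST (Var 1)))
 (AND (Ap1 VALID (Ap1 CSND (Var 1)))
      (BEX (Ap1 CSND (Var 1))
         (AND (Ap2 LDROP (Var 0) (Ap1 CSND (Var 2)))
              (EQ (Ap2 LNTH (Var 0) (Ap1 CSND (Var 2)))
                  (ENTRY (Cst 0) (Var 1) (Ap2 LCONS (Ap1 CFST (Var 2)) (Cst 0))
                     (Ap2 CPAIR (Cst 1) (Ap2 CPAIR (Var 1) (Cst 0)))))))).

Lemma holds_WITNESS e t : holds WITNESS [e; t] <-> witness e t.
Proof.
  unfold WITNESS, witness. rewrite !holds_AND, holds_BEX.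
  unfold holds at 1 2. sem_simpl. rewrite sem_CFST, sem_CFST, sem_CSND.
  change (sem VALID [csnd t] <> 0) with (holds VALID [csnd t]). rewrite holds_VALID.
  do 2 (apply iff_and; [reflexivity|]). apply iff_ex. intros i. apply iff_and; [reflexivity|].
  rewrite holds_AND, holds_EQ. unfold holds, ENTRY. sem_simpl.
  rewrite ?sem_LDROP, ?sem_LNTH, ?sem_CFST, ?sem_CSND, ?sem_LCONS, ?sem_CPAIR.
  reflexivity.
Qed.

Definition least_witness (e t : nat) : Prop :=
  witness e t /\ forall t', t' < t -> ~ witness e t'.

Definition LEAST_WITNESS :=
  AND (Ap2 WITNESS (Var 0) (Var 1)) (BALL (Var 1) (NOT (Ap2 WITNESS (Var 1) (Var 0)))).

Definition first_witness (e t : nat) : nat := sem LEAST_WITNESS [e; t].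

Lemma first_witness_spec e t : first_witness e t <> 0 <-> least_witness e t.
Proof.
  change (holds LEAST_WITNESS [e; t] <-> least_witness e t).
  unfold LEAST_WITNESS, least_witness. rewrite holds_AND, holds_BALL.
  unfold holds at 1. sem_simpl. rewrite (holds_WITNESS e t).
  apply iff_and; [reflexivity|]. apply iff_all. intros t'. apply iff_imp; [reflexivity|].
  rewrite holds_NOT. sem_simpl. rewrite <- holds_WITNESS. unfold holds. lia.
Qed.

Lemma first_witness_unique e t t' : first_witness e t <> 0 -> first_witness e t' <> 0 -> t = t'.
Proof.
  rewrite !first_witness_spec. intros [W1 L1] [W2 L2].
  destruct (Nat.lt_trichotomy t t') as [Lt|[Eq|Lt]]; auto.
  - destruct (L2 t Lt W1).
  - destruct (L1 t' Lt W2).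
Qed.

Definition fA := step (fun _ _ => 0).
Definition gB := step first_witness.

Lemma fA_computable : computable fA.
Proof. exact (computable_step (Cst 0) eq_refl). Qed.

Lemma gB_computable : computable gB.
Proof. apply (computable_step LEAST_WITNESS). vm_compute. reflexivity. Qed.

Lemma fA_21_1 : is_21_1 fA.
Proof. apply step_21_1. intros e t t' H. contradiction. Qed.

Lemma gB_21_1 : is_21_1 gB.
Proof. apply step_21_1, first_witness_unique. Qed.

Lemma fA_off_comets x : cfst x <> 0 -> fA x = x.
Proof.
  intros H. destruct (point_cases x) as [[m [d ->]]|[[e ->]|[[e [t [d ->]]]|Hx]]].
  - rewrite cfst_comet in H. lia.
  - apply step_target.
  - unfold fA. rewrite step_tail. reflexivity.
  - apply step_other, Hx.
Qed.

Lemma fA_preimg_off_comets x : cfst x <> 0 -> preimg_count fA x 1.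
Proof.
  intros H. destruct (point_cases x) as [[m [d ->]]|[[e ->]|[[e [t [d ->]]]|Hx]]].
  - rewrite cfst_comet in H. lia.
  - apply preimg_target_missed. reflexivity.
  - apply preimg_tail.
  - apply preimg_other, Hx.
Qed.

Lemma iter_succ_r (f : nat -> nat) k x : iter f (S k) x = iter f k (f x).
Proof. induction k; simpl in *; congruence. Qed.

Lemma fA_iter_comet m d : iter fA d (comet m d) = comet m 0.
Proof. induction d; auto. rewrite iter_succ_r. unfold fA. rewrite step_cometS. exact IHd. Qed.

Lemma fA_no_Z_chains : no_Z_chains fA.
Proof.
  intros x. destruct (Nat.eq_dec (cfst x) 0) as [H|H].
  - exists (comet (cfst (csnd x)) 0). split.
    + exists (csnd (csnd x)), 0. cbn [iter].
      rewrite <- (fA_iter_comet _ (csnd (csnd x))), <- comet_eta by exact H. reflexivity.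
    + exists 1. split; auto. apply step_comet0.
  - exists x. split; [exists 0, 0; reflexivity | exists 1; split; auto; apply fA_off_comets, H].
Qed.

Definition BETA :=
  Ap3 IF (Ap1 CFST (Var 0)) (Cst 1) (Ap3 IF (Ap1 CSND (Ap1 CSND (Var 0))) (Cst 1) (Cst 2)).

Lemma fA_beta_computable : beta_computable fA.
Proof.
  exists (fun x => sem BETA [x]). split; [apply computable_sem; reflexivity|].
  intros a. unfold BETA. sem_simpl. rewrite !sem_IF, !sem_CFST, !sem_CSND.
  destruct (cfst a) eqn:Ha; [|apply fA_preimg_off_comets; lia].
  rewrite (comet_eta a Ha). unfold comet at 2. simpl_cpair.
  destruct (csnd (csnd a)); [apply preimg_comet0 | apply preimg_cometS].
Qed.

Lemma preimg_count_unique f a k1 k2 : preimg_count f a k1 -> preimg_count f a k2 -> k1 = k2.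
Proof.
  intros [l1 [N1 [<- M1]]] [l2 [N2 [<- M2]]].
  apply Nat.le_antisymm; apply NoDup_incl_length; auto; intros y Hy;
    [apply M2, M1 | apply M1, M2]; exact Hy.
Qed.

Lemma tree_no_fixed_point (f : nat -> nat) r a b :
  f a = r -> a <> r -> in_tree f a b -> f b <> b.
Proof.
  intros Ha Hne [n Hn] Hb.
  assert (Hfix : forall k, iter f k b = b) by (induction k; simpl; congruence).
  rewrite Hfix in Hn. subst b. congruence.
Qed.

Lemma not_tree_iso_loop_child (f : nat -> nat) r a :
  f r = r -> f a = r -> a <> r -> ~ tree_iso f r a.
Proof.
  intros Hr Ha Hne [h [_ [_ [_ Hedge]]]].
  assert (Tr : in_tree f r r) by (exists 0; reflexivity).
  destruct (proj1 (Hedge r r Tr Tr) (conj Tr (conj Tr Hr))) as [T [_ E]].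
  exact (tree_no_fixed_point f r a (h r) Ha Hne T E).
Qed.

Lemma not_tree_iso_child_loop (f : nat -> nat) r a :
  f r = r -> f a = r -> a <> r -> ~ tree_iso f a r.
Proof.
  intros Hr Ha Hne [h [_ [_ [Hsurj Hedge]]]].
  assert (Tr : in_tree f r r) by (exists 0; reflexivity).
  destruct (Hsurj r Tr) as [b [Tb Hb]].
  assert (E : tree_edge f r (h b) (h b)) by (rewrite Hb; repeat split; auto).
  apply (Hedge b b Tb Tb) in E as [_ [_ E]].
  exact (tree_no_fixed_point f r a b Ha Hne Tb E).
Qed.

Lemma fA_iso_computable : iso_computable fA.
Proof.
  exists Zero. intros x Hx x1 x2 Hne H1 H2. exists 0.
  split; [constructor|]. split; [auto|]. split; [discriminate|]. intros Hiso. exfalso.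
  destruct (Nat.eq_dec (cfst x) 0) as [Hc|Hc];
    [|pose proof (preimg_count_unique _ _ _ _ Hx (fA_preimg_off_comets x Hc)); discriminate].
  rewrite (comet_eta x Hc) in *. set (m := cfst (csnd x)) in *.
  destruct (csnd (csnd x)) as [|d];
    [|pose proof (preimg_count_unique _ _ _ _ Hx (preimg_cometS _ m d)); discriminate].
  assert (Hpre : forall y, fA y = comet m 0 -> y = comet m 0 \/ y = comet m 1).
  { intros y Hy.
    apply step_preimage in Hy as [[-> _]|[[m' [d [-> Ha]]]|[[e [t [Hw _]]]|[e [t [d [Hw _]]]]]]];
      [left; reflexivity | | exfalso; apply Hw; reflexivity ..].
    apply comet_inj in Ha as [-> ->]. right; reflexivity. }
  assert (F0 : fA (comet m 0) = comet m 0) by apply step_comet0.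
  assert (F1 : comet m 1 <> comet m 0) by (intros E; apply comet_inj in E; lia).
  destruct (Hpre x1 H1) as [-> | ->]; destruct (Hpre x2 H2) as [-> | ->]; try contradiction.
  - apply (not_tree_iso_loop_child fA (comet m 0) (comet m 1)); auto.
  - apply (not_tree_iso_child_loop fA (comet m 0) (comet m 1)); auto.
Qed.

(** * An isomorphism from [A] onto [B] *)

Definition unbounded (P : nat -> Prop) : Prop := forall n, exists m, n <= m /\ P m.

Section Enumeration.
Variable P : nat -> Prop.
Hypothesis P_unbounded : unbounded P.

Let least_above n : exists m, (n <= m /\ P m) /\ forall m', n <= m' /\ P m' -> m <= m'.
Proof.
  destruct (dec_inh_nat_subset_has_unique_least_element (fun m => n <= m /\ P m))
    as [m [Hm _]]; eauto using classic.
Qed.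

Definition next_in n : nat := proj1_sig (constructive_indefinite_description _ (least_above n)).

Lemma next_in_spec n : (n <= next_in n /\ P (next_in n)) /\
  forall m, n <= m /\ P m -> next_in n <= m.
Proof. unfold next_in. destruct (constructive_indefinite_description _ _). exact a. Qed.

Fixpoint enum_in (k : nat) : nat :=
  match k with 0 => next_in 0 | S k' => next_in (S (enum_in k')) end.

Lemma enum_in_P k : P (enum_in k).
Proof. destruct k; apply next_in_spec. Qed.

Lemma enum_in_lt_succ k : enum_in k < enum_in (S k).
Proof. apply next_in_spec. Qed.

Lemma enum_in_mono k k' : k < k' -> enum_in k < enum_in k'.
Proof. induction 1; [apply enum_in_lt_succ|]. pose proof (enum_in_lt_succ m). lia. Qed.

Lemma enum_in_inj k k' : enum_in k = enum_in k' -> k = k'.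
Proof.
  intros H. destruct (Nat.lt_trichotomy k k') as [L|[L|L]]; auto;
    apply enum_in_mono in L; lia.
Qed.

Lemma enum_in_ge k : k <= enum_in k.
Proof. induction k; [lia|]. pose proof (enum_in_lt_succ k). lia. Qed.

Lemma enum_in_onto m : P m -> exists k, enum_in k = m.
Proof.
  intros Pm.
  assert (H0 : enum_in 0 <= m) by (apply next_in_spec; split; [lia | exact Pm]).
  assert (Hbracket : forall N, m < enum_in N -> exists k, enum_in k <= m < enum_in (S k)).
  { induction N as [|N IH]; intros HN; [lia|].
    destruct (le_lt_dec (enum_in N) m); [exists N; auto | apply IH; auto]. }
  destruct (Hbracket (S m)) as [k [K1 K2]]; [pose proof (enum_in_ge (S m)); lia|].
  exists k. destruct (Nat.eq_dec (enum_in k) m) as [|Hne]; auto.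
  pose proof (proj2 (next_in_spec (S (enum_in k))) m ltac:(split; [lia | exact Pm])).
  simpl in K2. lia.
Qed.

End Enumeration.

Lemma unbounded_bijection P Q : unbounded P -> unbounded Q ->
  exists b : nat -> nat, (forall x, P x -> Q (b x)) /\
    (forall x x', P x -> P x' -> b x = b x' -> x = x') /\
    (forall y, Q y -> exists x, P x /\ b x = y).
Proof.
  intros HP HQ.
  assert (Hinv : forall x, exists k, P x -> enum_in P HP k = x).
  { intros x. destruct (classic (P x)) as [Px|Px].
    - destruct (enum_in_onto P HP x Px) as [k Hk]. eauto.
    - exists 0. tauto. }
  destruct (choice _ Hinv) as [inv Hi].
  exists (fun x => enum_in Q HQ (inv x)). split; [|split].
  - intros x _. apply enum_in_P.
  - intros x x' Px Px' E. apply enum_in_inj in E. rewrite <- (Hi x Px), <- (Hi x' Px'), E. reflexivity.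
  - intros y Qy. destruct (enum_in_onto Q HQ y Qy) as [k <-].
    exists (enum_in P HP k). split; [apply enum_in_P|].
    f_equal. apply (enum_in_inj P HP). apply Hi, enum_in_P.
Qed.

Definition converges (e : nat) : Prop := exists t, first_witness e t <> 0.

Definition B_head (y : nat) : Prop :=
  (exists m, y = comet m 0) \/ (exists e, y = target e /\ converges e).

Definition B_isolated (y : nat) : Prop :=
  2 <= cfst y \/ (exists e, y = target e /\ ~ converges e) \/
  (exists e t d, y = tail_pt e t d /\ first_witness e t = 0).

Lemma gB_isolated y : B_isolated y -> gB y = y.
Proof.
  intros [H|[[e [-> _]]|[e [t [d [-> Hw]]]]]].
  - apply step_other, H.
  - apply step_target.
  - unfold gB. rewrite step_tail, Hw. reflexivity.
Qed.

Section Rays.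
Variable tsel : nat -> nat.
Hypothesis tsel_spec : forall e, converges e -> first_witness e (tsel e) <> 0.

(* The ray of [B] ending in the head [y], indexed by the distance to [y]. *)
Definition ray (y d : nat) : nat :=
  match cfst y with
  | 0 => comet (cfst (csnd y)) d
  | _ => match d with 0 => y | S d' => tail_pt (cfst (csnd y)) (tsel (cfst (csnd y))) d' end
  end.

Lemma ray_comet m d : ray (comet m 0) d = comet m d.
Proof. unfold ray, comet. simpl_cpair. reflexivity. Qed.

Lemma ray_target e d :
  ray (target e) d = match d with 0 => target e | S d' => tail_pt e (tsel e) d' end.
Proof.
  unfold ray. rewrite cfst_target.
  replace (cfst (csnd (target e))) with e by (unfold target; simpl_cpair; reflexivity).
  reflexivity.
Qed.

Lemma gB_ray_succ y d : B_head y -> gB (ray y (S d)) = ray y d.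
Proof.
  intros [[m ->]|[e [-> Hc]]].
  - rewrite !ray_comet. apply step_cometS.
  - rewrite !ray_target. unfold gB. rewrite step_tail.
    destruct (first_witness e (tsel e)) eqn:E; [destruct (tsel_spec e Hc E)|]. destruct d; auto.
Qed.

Lemma gB_ray_0 y : B_head y -> gB (ray y 0) = ray y 0.
Proof.
  intros [[m ->]|[e [-> _]]].
  - rewrite ray_comet. apply step_comet0.
  - rewrite ray_target. apply step_target.
Qed.

Ltac cfst_absurd E :=
  apply (f_equal cfst) in E; rewrite ?cfst_comet, ?cfst_target, ?cfst_tail in E; discriminate.

Lemma ray_not_isolated y d : B_head y -> ~ B_isolated (ray y d).
Proof.
  intros [[m ->]|[e [-> Hc]]] [H|[[e' [E Hc']]|[e' [t [d' [E Hw]]]]]];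
    rewrite ?ray_comet, ?ray_target in *; try destruct d;
    rewrite ?cfst_comet, ?cfst_target, ?cfst_tail in *; try lia; try cfst_absurd E;
    try solve [destruct (target_neq_tail _ _ _ _ E) | destruct (target_neq_tail _ _ _ _ (eq_sym E))].
  - apply target_inj in E. subst. contradiction.
  - apply tail_inj in E as [<- [<- _]]. exact (tsel_spec e Hc Hw).
Qed.

Lemma ray_inj y y' d d' : B_head y -> B_head y' -> ray y d = ray y' d' -> y = y' /\ d = d'.
Proof.
  intros [[m ->]|[e [-> _]]] [[m' ->]|[e' [-> _]]];
    rewrite ?ray_comet, ?ray_target; intros E; [| destruct d' | destruct d | destruct d, d'];
    try cfst_absurd E;
    try solve [destruct (target_neq_tail _ _ _ _ E) | destruct (target_neq_tail _ _ _ _ (eq_sym E))].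
  - apply comet_inj in E as [-> ->]. auto.
  - apply target_inj in E as ->. auto.
  - apply tail_inj in E as [-> [_ ->]]. auto.
Qed.

Lemma ray_onto z : ~ B_isolated z -> exists y d, B_head y /\ ray y d = z.
Proof.
  intros Hz. destruct (point_cases z) as [[m [d ->]]|[[e ->]|[[e [t [d ->]]]|H]]].
  - exists (comet m 0), d. split; [left; eauto | apply ray_comet].
  - exists (target e), 0. split; [|apply ray_target].
    right. exists e. split; auto. apply NNPP. intros Hc. apply Hz. right; left; eauto.
  - destruct (first_witness e t) eqn:Hw; [exfalso; apply Hz; do 2 right; eauto|].
    assert (Hc : converges e) by (exists t; lia).
    exists (target e), (S d). split; [right; eauto|]. rewrite ray_target.
    rewrite (first_witness_unique e (tsel e) t); auto. lia.
  - exfalso. apply Hz. left. exact H.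
Qed.

Variables bH bI : nat -> nat.
Hypothesis bH_head : forall k, B_head (bH k).
Hypothesis bH_inj : forall k k', bH k = bH k' -> k = k'.
Hypothesis bH_onto : forall y, B_head y -> exists k, bH k = y.
Hypothesis bI_isolated : forall x, cfst x <> 0 -> B_isolated (bI x).
Hypothesis bI_inj : forall x x', cfst x <> 0 -> cfst x' <> 0 -> bI x = bI x' -> x = x'.
Hypothesis bI_onto : forall y, B_isolated y -> exists x, cfst x <> 0 /\ bI x = y.

Definition iso_AB (x : nat) : nat :=
  match cfst x with 0 => ray (bH (cfst (csnd x))) (csnd (csnd x)) | S _ => bI x end.

Lemma iso_AB_comet m d : iso_AB (comet m d) = ray (bH m) d.
Proof. unfold iso_AB, comet. simpl_cpair. reflexivity. Qed.

Lemma iso_AB_off x : cfst x <> 0 -> iso_AB x = bI x.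
Proof. intros H. unfold iso_AB. destruct (cfst x); [lia | reflexivity]. Qed.

Lemma iso_AB_inj x x' : iso_AB x = iso_AB x' -> x = x'.
Proof.
  destruct (Nat.eq_dec (cfst x) 0) as [H|H], (Nat.eq_dec (cfst x') 0) as [H'|H'];
    [rewrite (comet_eta x H), (comet_eta x' H'), !iso_AB_comet
    | rewrite (comet_eta x H), iso_AB_comet, (iso_AB_off x' H')
    | rewrite (comet_eta x' H'), iso_AB_comet, (iso_AB_off x H)
    | rewrite !iso_AB_off by auto]; intros E.
  - apply ray_inj in E as [E Ed]; [|apply bH_head ..]. apply bH_inj in E. rewrite E, Ed. reflexivity.
  - exfalso. eapply ray_not_isolated; [apply bH_head|]. rewrite E. auto.
  - exfalso. eapply ray_not_isolated; [apply bH_head|]. rewrite <- E. auto.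
  - auto.
Qed.

Lemma iso_AB_onto y : exists x, iso_AB x = y.
Proof.
  destruct (classic (B_isolated y)) as [Hy|Hy].
  - destruct (bI_onto y Hy) as [x [Hx <-]]. exists x. apply iso_AB_off, Hx.
  - destruct (ray_onto y Hy) as [h [d [Hh <-]]]. destruct (bH_onto h Hh) as [m <-].
    exists (comet m d). apply iso_AB_comet.
Qed.

Lemma iso_AB_hom x : iso_AB (fA x) = gB (iso_AB x).
Proof.
  destruct (Nat.eq_dec (cfst x) 0) as [H|H].
  - rewrite (comet_eta x H). destruct (csnd (csnd x)) as [|d].
    + unfold fA. rewrite step_comet0, iso_AB_comet. symmetry. apply gB_ray_0, bH_head.
    + unfold fA. rewrite step_cometS, !iso_AB_comet. symmetry. apply gB_ray_succ, bH_head.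
  - rewrite fA_off_comets, iso_AB_off by auto. symmetry. apply gB_isolated, bI_isolated, H.
Qed.

End Rays.

Lemma A_iso_B : exists h, struct_iso fA gB h.
Proof.
  assert (Htsel : forall e, exists t, converges e -> first_witness e t <> 0).
  { intros e. destruct (classic (converges e)) as [[t Ht]|Hn]; [exists t | exists 0]; tauto. }
  destruct (choice _ Htsel) as [tsel Hts].
  destruct (unbounded_bijection (fun _ => True) B_head) as [bH [Hh [Hhi Hho]]].
  { intros n. exists n; auto. }
  { intros n. exists (comet n 0). split; [|left; eauto].
    unfold comet. pose proof (cpair_ge_l n 0). pose proof (cpair_ge_r 0 (cpair n 0)). lia. }
  destruct (unbounded_bijection (fun x => cfst x <> 0) B_isolated) as [bI [Hi [Hii Hio]]].
  { intros n. exists (cpair 1 n). split; [apply cpair_ge_r | rewrite cfst_cpair; lia]. }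
  { intros n. exists (cpair 2 n). split; [apply cpair_ge_r | left; rewrite cfst_cpair; lia]. }
  exists (iso_AB tsel bH bI). split; [|split].
  - apply iso_AB_inj; auto.
  - apply iso_AB_onto; auto. intros y Hy. destruct (Hho y Hy) as [k [_ Hk]]. eauto.
  - apply iso_AB_hom; auto.
Qed.

(** * No computable isomorphism *)

Lemma witness_sound c t : witness (enc c) t -> eval c [cfst t] (target (enc c)).
Proof.
  intros [_ [HV [i [_ [_ Hi]]]]].
  pose proof (valid_trace_sound _ HV i) as Htrue. rewrite Hi in Htrue.
  exact (entry_true_eval _ _ _ c [cfst t] Htrue eq_refl eq_refl).
Qed.

Lemma witness_complete c z :
  cfst z <> 0 -> eval c [z] (target (enc c)) -> exists t, witness (enc c) t.
Proof.
  intros Hz Hev. destruct (eval_derivable _ _ _ Hev) as [T [VT IT]].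
  destruct (In_nth _ _ 0 IT) as [j [Hj Ej]].
  exists (cpair z (enc_list T)). unfold witness. simpl_cpair.
  split; [exact Hz|]. split; [apply valid_trace_enc_list, VT|].
  exists j. split; [pose proof (length_le_enc_list T); lia|].
  split; [apply ldrop_enc_list_neq0, Hj|]. rewrite lnth_enc_list, Ej. reflexivity.
Qed.

Lemma witness_first e : (exists t, witness e t) -> exists t, first_witness e t <> 0.
Proof.
  intros Hex. destruct (dec_inh_nat_subset_has_unique_least_element (witness e))
    as [t [[Ht Hmin] _]]; auto using classic.
  exists t. apply first_witness_spec. split; auto.
  intros t' Hlt Ht'. specialize (Hmin t' Ht'). lia.
Qed.

Section Diagonal.
Variables (c : code) (h : nat -> nat).
Hypothesis h_computes : forall x, eval c [x] (h x).
Hypothesis h_iso : struct_iso fA gB h.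

Let e := enc c.

Lemma iso_target_fixed z : h z = target e -> fA z = z.
Proof.
  destruct h_iso as [Hinj [_ Hhom]]. intros Hz.
  apply Hinj. rewrite Hhom, Hz. apply step_target.
Qed.

Lemma iso_target_off_comets z : h z = target e -> cfst z <> 0.
Proof.
  destruct h_iso as [Hinj [_ Hhom]]. intros Hz Hc0.
  pose proof (comet_eta z Hc0) as Ez. set (m := cfst (csnd z)) in Ez.
  destruct (csnd (csnd z)) as [|d] eqn:Ed.
  2: { pose proof (iso_target_fixed z Hz) as F. rewrite Ez in F. unfold fA in F.
       rewrite step_cometS in F. apply comet_inj in F. lia. }
  assert (Hne : h (comet m 1) <> target e).
  { rewrite <- Hz, Ez. intros E. apply Hinj, comet_inj in E. lia. }
  assert (G : gB (h (comet m 1)) = target e).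
  { rewrite <- Hhom. unfold fA. rewrite step_cometS, <- Ez. exact Hz. }
  apply step_preimage in G as [[G _]|[[m' [d' [_ G]]]|[[e' [t [Hw [G1 G2]]]]|[e' [t [d' [_ [_ G]]]]]]]].
  - contradiction.
  - destruct (comet_neq_target _ _ _ (eq_sym G)).
  - apply target_inj in G2. subst e'.
    apply first_witness_spec in Hw as [[Hoff Hwit] _].
    pose proof (eval_deterministic _ _ _ _ (witness_sound c t (conj Hoff Hwit))
                  (h_computes (cfst t))) as D.
    fold e in D. rewrite <- Hz in D. apply Hinj in D. rewrite <- D, Ez in Hoff. apply Hoff, cfst_comet.
  - destruct (target_neq_tail _ _ _ _ G).
Qed.

Lemma no_target_preimage : False.
Proof.
  destruct h_iso as [Hinj [Hsurj Hhom]].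
  destruct (Hsurj (target e)) as [z Hz].
  pose proof (iso_target_off_comets z Hz) as Hoff.
  destruct (witness_first e) as [t Hw].
  { apply (witness_complete c z Hoff). fold e. rewrite <- Hz. apply h_computes. }
  destruct (Hsurj (tail_pt e t 0)) as [x Hx].
  assert (Fx : fA x = z).
  { apply Hinj. rewrite Hhom, Hx, Hz. unfold gB. rewrite step_tail.
    destruct (first_witness e t); [contradiction | reflexivity]. }
  apply step_preimage in Fx as [[-> _]|[[m [d [_ Ez]]]|[[e' [t' [Hw' _]]]|[e' [t' [d [Hw' _]]]]]]];
    try (apply Hw'; reflexivity).
  - rewrite Hz in Hx. destruct (target_neq_tail _ _ _ _ Hx).
  - apply Hoff. rewrite Ez. apply cfst_comet.
Qed.

End Diagonal.

Lemma no_computable_iso h : computable h -> ~ struct_iso fA gB h.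
Proof. intros [c Hc] Hiso. exact (no_target_preimage c h Hc Hiso). Qed.

Theorem proposition3p3 :
  exists f : nat -> nat,
    computable f /\ is_21_1 f /\ no_Z_chains f /\
    beta_computable f /\ iso_computable f /\
    exists g : nat -> nat,
      computable g /\ is_21_1 g /\
      (exists h, struct_iso f g h) /\
      (forall h, computable h -> ~ struct_iso f g h).
Proof.
  exists fA. repeat split.
  - exact fA_computable.
  - exact fA_21_1.
  - exact fA_no_Z_chains.
  - exact fA_beta_computable.
  - exact fA_iso_computable.
  - exists gB. repeat split.
    + exact gB_computable.
    + exact gB_21_1.
    + exact A_iso_B.
    + exact no_computable_iso.
Qed.
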